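(* Let $x=[a_1,\ldots,a_t,\ldots]\in(0,1)$ be irrational, and let $q_i=q_i(x)$ denote the denominator of the $i$-th convergent $p_i/q_i=[0;a_1,\ldots,a_i]$. Then for every nonzero $\delta$ of sufficiently small absolute value there exists $t=t(x,\delta)$ such that $$\frac{g_{\varphi^{-1}}(x+\delta)-g_{\varphi^{-1}}(x)}{\delta}\ge\frac{q_tq_{t-1}}{\varphi^{S^{\varphi}_t(x)+7}},\qquad \frac{g_{\tau}(x+\delta)-g_{\tau}(x)}{\delta}\ge\frac{q_tq_{t-1}}{\varphi^{S^{\tau}_t(x)+9}}.$$
   Context: $\varphi=\frac{1+\sqrt5}2$, $\tau=\varphi^{-2}$. For irrational $x=[0;a_1,a_2,\ldots]$: $S^{\varphi}_t(x)=a_1+2a_2+a_3+2a_4+\cdots$ ($t$ terms, coefficient $1$ on odd and $2$ on even indices) and $S^{\tau}_t(x)=2a_1+a_2+2a_3+a_4+\cdots$ ($t$ terms, coefficient $2$ on odd and $1$ on even indices). For $\lambda\in(0,1)$, $g_\lambda:[0,1]\to[0,1]$ is defined by $g_\lambda(0)=0$, $g_\lambda(1)=1$, $g_\lambda\!\left(\frac{p+r}{q+s}\right)=(1-\lambda)g_\lambda(\frac pq)+\lambda g_\lambda(\frac rs)$ for consecutive Farey fractions $\frac pq<\frac rs$ at which it is already defined, and continuity; for irrational $x$, $g_{\varphi^{-1}}(x)=\sum_{i\ge1}(-1)^{i-1}\varphi^{-(S^{\varphi}_i(x)-1)}$ and $g_\tau(x)=\sum_{i\ge1}(-1)^{i-1}\varphi^{-(S^{\tau}_i(x)-2)}$.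 *)

From Stdlib Require Import Reals Lra Lia ZArith.
Open Scope R_scope.

Definition phi : R := (1 + sqrt 5) / 2.
Definition tau : R := / (phi ^ 2).

Definition irrational (x : R) : Prop :=
  forall (p q : Z), q <> 0%Z -> x <> IZR p / IZR q.

Definition floorZ (x : R) : Z := Int_part x.

Definition gauss (y : R) : R := / y - IZR (floorZ (/ y)).

Fixpoint gauss_iter (n : nat) (x : R) : R :=
  match n with
  | O => x
  | S n' => gauss (gauss_iter n' x)
  end.

(** Partial quotients: x = [0; a_1, a_2, ...], a_i = floor(1 / T^{i-1}(x)),
    for i >= 1 (the value at i = 0 is irrelevant). *)
Definition cf_digit (x : R) (i : nat) : nat :=
  Z.to_nat (floorZ (/ gauss_iter (i - 1) x)).

(** Denominators of convergents: q_{-1} = 0, q_0 = 1,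
    q_i = a_i q_{i-1} + q_{i-2}.  cf_qpair x n = (q_{n-1}, q_n). *)
Fixpoint cf_qpair (x : R) (n : nat) : nat * nat :=
  match n with
  | O => (0%nat, 1%nat)
  | S n' => let (qm, qc) := cf_qpair x n' in
            (qc, (cf_digit x n * qc + qm)%nat)
  end.

Definition cf_q (x : R) (n : nat) : nat := snd (cf_qpair x n).

Fixpoint S_phi (x : R) (t : nat) : nat :=
  match t with
  | O => O
  | S t' => (S_phi x t' + (if Nat.odd t then 1 else 2) * cf_digit x t)%nat
  end.

Fixpoint S_tau (x : R) (t : nat) : nat :=
  match t with
  | O => O
  | S t' => (S_tau x t' + (if Nat.odd t then 2 else 1) * cf_digit x t)%nat
  end.

(** [is_g lam g]: g agrees on [0,1] with the function g_lambda of the paper: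
    g(0)=0, g(1)=1, the Farey-mediant recursion
    g((p+r)/(q+s)) = (1-lam) g(p/q) + lam g(r/s) for consecutive Farey
    fractions p/q < r/s in [0,1] (i.e. r q - p s = 1), and continuity on [0,1]. *)
Definition is_g (lam : R) (g : R -> R) : Prop :=
  g 0 = 0 /\ g 1 = 1 /\
  (forall p q r s : nat, (0 < q)%nat -> (0 < s)%nat -> (r <= s)%nat ->
     (r * q = p * s + 1)%nat ->
     g (INR (p + r) / INR (q + s)) =
       (1 - lam) * g (INR p / INR q) + lam * g (INR r / INR s)) /\
  (forall y, 0 <= y <= 1 -> forall eps, 0 < eps -> exists d, 0 < d /\
     forall z, 0 <= z <= 1 -> Rabs (z - y) < d -> Rabs (g z - g y) < eps).

(* The Farey recursion makes [g] monotone and fixes its increments on the cylinders of the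
   continued fraction expansion of [x]: if the cylinder of rank [n] (between [p_n/q_n] and
   [(p_n + p_{n-1}) / (q_n + q_{n-1})]) has [g]-mass [M_n], then
   [M_{n+1} = M_n w^(a_{n+1} - 1) (1 - w)] with [w] equal to [lam] or [1 - lam] according to
   the parity of [n].  For [lam = 1/phi] or [tau] this makes [M_t] a power of [1/phi] given by
   [S_t(x)] up to a bounded shift.
   Given [y = x + delta], take the last cylinder containing both [x] and [y].  Either a whole
   sub-cylinder of rank [n + 1] or [n + 2] lies between them, or [y] falls just across an
   endpoint [p_m/q_m], and then the quotient is split at that endpoint.  In each case the
   difference quotient is at least a known mass over a length at most
   [1 / (q_m (k q_m + q_{m-1}))], and estimates with powers of [phi] turn this into
   [M_t q_t q_{t-1} / phi^6] for some [t]. *)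

From Stdlib Require Import Reals Lra Lia Psatz ZArith Classical.
Open Scope R_scope.

(** * Farey fractions and the monotonicity of [g] *)

Definition ratio (a b : nat) : R := INR a / INR b.

Lemma ratio_le a b c d : (0 < b)%nat -> (0 < d)%nat ->
  (a * d <= c * b)%nat -> ratio a b <= ratio c d.
Proof.
  intros Hb Hd H. unfold ratio.
  apply le_INR in H. rewrite !mult_INR in H.
  assert (0 < INR b) by (apply lt_0_INR; lia).
  assert (0 < INR d) by (apply lt_0_INR; lia).
  apply (Rmult_le_reg_r (INR b * INR d)); [nra|].
  replace (INR a / INR b * (INR b * INR d)) with (INR a * INR d) by (field; lra).
  replace (INR c / INR d * (INR b * INR d)) with (INR c * INR b) by (field; lra).
  lra.
Qed.

Lemma ratio_le_inv a b c d : (0 < b)%nat -> (0 < d)%nat ->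
  ratio a b <= ratio c d -> (a * d <= c * b)%nat.
Proof.
  intros Hb Hd H. unfold ratio in H.
  assert (0 < INR b) by (apply lt_0_INR; lia).
  assert (0 < INR d) by (apply lt_0_INR; lia).
  apply INR_le. rewrite !mult_INR.
  apply (Rmult_le_compat_r (INR b * INR d)) in H; [|nra].
  replace (INR a / INR b * (INR b * INR d)) with (INR a * INR d) in H by (field; lra).
  replace (INR c / INR d * (INR b * INR d)) with (INR c * INR b) in H by (field; lra).
  exact H.
Qed.

Lemma ratio_eq a b c d : (0 < b)%nat -> (0 < d)%nat ->
  (a * d = c * b)%nat -> ratio a b = ratio c d.
Proof. intros Hb Hd H. apply Rle_antisym; apply ratio_le; lia. Qed.

Lemma ratio_le_1 a b : (0 < b)%nat -> ratio a b <= 1 -> (a <= b)%nat.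
Proof.
  intros Hb H. replace 1 with (ratio 1 1) in H by (unfold ratio; simpl; field).
  apply ratio_le_inv in H; lia.
Qed.

Lemma exists_ratio_between lo hi : 0 <= lo < hi ->
  exists a b : nat, (0 < b)%nat /\ lo < ratio a b < hi.
Proof.
  intros [H0 H1].
  destruct (archimed (/ (hi - lo))) as [Hu _].
  assert (Hpos : 0 < / (hi - lo)) by (apply Rinv_0_lt_compat; lra).
  set (b := Z.to_nat (up (/ (hi - lo)))).
  assert (Hb : INR b = IZR (up (/ (hi - lo)))).
  { unfold b. rewrite INR_IZR_INZ, Z2Nat.id; auto. apply le_IZR. lra. }
  assert (Hb0 : 0 < INR b) by lra.
  assert (Hgap : (hi - lo) * INR b > 1).
  { rewrite Hb. apply (Rmult_lt_compat_l (hi - lo)) in Hu; [|lra].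
    rewrite Rinv_r in Hu; lra. }
  destruct (archimed (lo * INR b)) as [Hz1 Hz2].
  set (a := Z.to_nat (up (lo * INR b))).
  assert (Ha : INR a = IZR (up (lo * INR b))).
  { unfold a. rewrite INR_IZR_INZ, Z2Nat.id; auto. apply le_IZR. nra. }
  exists a, b. split; [apply INR_lt; simpl; lra|]. unfold ratio. rewrite Ha.
  split; apply (Rmult_lt_reg_r (INR b)); auto;
    replace (IZR (up (lo * INR b)) / INR b * INR b) with (IZR (up (lo * INR b)))
      by (field; lra); lra.
Qed.

Definition farey_pair (p q r s : nat) : Prop :=
  (0 < q)%nat /\ (0 < s)%nat /\ (r <= s)%nat /\ (r * q = p * s + 1)%nat.

Lemma farey_pair_children p q r s : farey_pair p q r s ->
  farey_pair p q (p + r) (q + s) /\ farey_pair (p + r) (q + s) r s.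
Proof.
  intros (Hq & Hs & Hrs & Hd). assert (p < q)%nat by nia.
  split; repeat split; try lia; nia.
Qed.

Lemma farey_pair_denom p q r s a b : farey_pair p q r s ->
  (p * b < a * q)%nat -> (a * s < r * b)%nat -> (q + s <= b)%nat.
Proof. intros (Hq & Hs & Hrs & Hd) H1 H2. nia. Qed.

Definition mediant_rec (lam : R) (g : R -> R) : Prop :=
  forall p q r s : nat, (0 < q)%nat -> (0 < s)%nat -> (r <= s)%nat ->
  (r * q = p * s + 1)%nat ->
  g (INR (p + r) / INR (q + s)) = (1 - lam) * g (INR p / INR q) + lam * g (INR r / INR s).

Definition continuous_01 (g : R -> R) : Prop :=
  forall y, 0 <= y <= 1 -> forall eps, 0 < eps -> exists d, 0 < d /\
  forall z, 0 <= z <= 1 -> Rabs (z - y) < d -> Rabs (g z - g y) < eps.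

Section Monotone.

Variables (lam : R) (g : R -> R).
Hypothesis Hlam : 0 < lam < 1.
Hypothesis Hg0 : g 0 = 0.
Hypothesis Hg1 : g 1 = 1.
Hypothesis Hrec : mediant_rec lam g.
Hypothesis Hcont : continuous_01 g.

Lemma g_mediant p q r s : farey_pair p q r s ->
  g (ratio (p + r) (q + s)) = (1 - lam) * g (ratio p q) + lam * g (ratio r s).
Proof. intros (? & ? & ? & ?). apply Hrec; auto. Qed.

(* Every Farey pair other than (0/1, 1/1) is a child of a pair with smaller
   denominators, so induction on q + s reduces to g 0 <= g 1. *)
Lemma g_farey_pair_le p q r s : farey_pair p q r s -> g (ratio p q) <= g (ratio r s).
Proof.
  remember (q + s)%nat as F eqn:HF. revert p q r s HF.
  induction F as [F IH] using lt_wf_ind.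
  intros p q r s HF H. pose proof H as (Hq & Hs & Hrs & Hd).
  destruct (Nat.lt_trichotomy q s) as [Hlt | [Heq | Hgt]].
  - assert (Hpr : (p <= r)%nat) by nia.
    assert (Hpar : farey_pair p q (r - p) (s - q)) by (repeat split; try lia; nia).
    pose proof (IH (q + (s - q))%nat ltac:(lia) _ _ _ _ eq_refl Hpar).
    pose proof (g_mediant _ _ _ _ Hpar) as E.
    replace (p + (r - p))%nat with r in E by lia.
    replace (q + (s - q))%nat with s in E by lia.
    rewrite E. nra.
  - subst s. assert (p < r)%nat by nia. assert (q = 1)%nat by nia. subst q.
    assert (p = 0)%nat by nia. assert (r = 1)%nat by lia. subst.
    unfold ratio; simpl. replace (0 / 1) with 0 by field. replace (1 / 1) with 1 by field. lra.
  - assert (Hpr : (r <= p)%nat) by nia.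
    assert (Hpar : farey_pair (p - r) (q - s) r s) by (repeat split; try lia; nia).
    pose proof (IH (q - s + s)%nat ltac:(lia) _ _ _ _ eq_refl Hpar).
    pose proof (g_mediant _ _ _ _ Hpar) as E.
    replace (p - r + r)%nat with p in E by lia.
    replace (q - s + s)%nat with q in E by lia.
    rewrite E. nra.
Qed.

Lemma g_ratio_between_farey p q r s a b : farey_pair p q r s -> (0 < b)%nat ->
  (p * b <= a * q)%nat -> (a * s <= r * b)%nat ->
  g (ratio p q) <= g (ratio a b) <= g (ratio r s).
Proof.
  remember (b + 1 - (q + s))%nat as F eqn:HF. revert p q r s HF.
  induction F as [F IH] using lt_wf_ind.
  intros p q r s HF H Hb H1 H2.
  pose proof (g_farey_pair_le _ _ _ _ H) as Hle. pose proof H as (Hq & Hs & _ & _).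
  destruct (Nat.eq_dec (p * b) (a * q)) as [E | E].
  { rewrite <- (ratio_eq p q a b) by lia. lra. }
  destruct (Nat.eq_dec (a * s) (r * b)) as [E' | E'].
  { rewrite (ratio_eq a b r s) by lia. lra. }
  pose proof (farey_pair_denom _ _ _ _ a b H ltac:(lia) ltac:(lia)).
  destruct (farey_pair_children _ _ _ _ H) as [HL HR].
  pose proof (g_farey_pair_le _ _ _ _ HL). pose proof (g_farey_pair_le _ _ _ _ HR).
  destruct (le_lt_dec (a * (q + s)) ((p + r) * b)) as [C | C].
  - pose proof (IH (b + 1 - (q + (q + s)))%nat ltac:(lia) _ _ _ _ eq_refl HL Hb H1 C). lra.
  - pose proof (IH (b + 1 - (q + s + s))%nat ltac:(lia) _ _ _ _ eq_refl HR Hb ltac:(lia) H2).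
    lra.
Qed.

(* Descend the Stern-Brocot tree until the mediant separates a/b from c/d. *)
Lemma g_ratio_mono_farey p q r s a b c d : farey_pair p q r s ->
  (0 < b)%nat -> (0 < d)%nat ->
  (p * b <= a * q)%nat -> (a * d <= c * b)%nat -> (c * s <= r * d)%nat ->
  g (ratio a b) <= g (ratio c d).
Proof.
  remember (b + d + 2 - 2 * (q + s))%nat as F eqn:HF. revert p q r s HF.
  induction F as [F IH] using lt_wf_ind.
  intros p q r s HF H Hb Hd H1 H2 H3. pose proof H as (Hq & Hs & _ & _).
  destruct (Nat.eq_dec (p * b) (a * q)) as [E | E].
  { rewrite (ratio_eq a b p q) by lia.
    apply (g_ratio_between_farey p q r s c d); auto; nia. }
  destruct (Nat.eq_dec (c * s) (r * d)) as [E' | E'].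
  { rewrite (ratio_eq c d r s) by lia.
    apply (g_ratio_between_farey p q r s a b); auto; nia. }
  assert (Has : (a * s < r * b)%nat).
  { apply (Nat.mul_lt_mono_pos_r d); [lia|]. nia. }
  assert (Hpd : (p * d < c * q)%nat).
  { apply (Nat.mul_lt_mono_pos_r b); [lia|]. nia. }
  pose proof (farey_pair_denom _ _ _ _ a b H ltac:(lia) Has).
  pose proof (farey_pair_denom _ _ _ _ c d H Hpd ltac:(lia)).
  destruct (farey_pair_children _ _ _ _ H) as [HL HR].
  destruct (le_lt_dec (a * (q + s)) ((p + r) * b)) as [C | C];
  destruct (le_lt_dec (c * (q + s)) ((p + r) * d)) as [C' | C'].
  - apply (IH (b + d + 2 - 2 * (q + (q + s)))%nat ltac:(lia) _ _ _ _ eq_refl HL); auto.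
  - pose proof (g_ratio_between_farey _ _ _ _ a b HL Hb H1 C).
    pose proof (g_ratio_between_farey _ _ _ _ c d HR Hd ltac:(lia) H3). lra.
  - exfalso. nia.
  - apply (IH (b + d + 2 - 2 * (q + s + s))%nat ltac:(lia) _ _ _ _ eq_refl HR); auto; lia.
Qed.

Lemma g_ratio_mono a b c d : (0 < b)%nat -> (0 < d)%nat -> (c <= d)%nat ->
  ratio a b <= ratio c d -> g (ratio a b) <= g (ratio c d).
Proof.
  intros Hb Hd Hcd H. apply ratio_le_inv in H; auto.
  apply (g_ratio_mono_farey 0 1 1 1); try lia. repeat split; lia.
Qed.

Lemma g_mono z1 z2 : 0 <= z1 -> z1 <= z2 -> z2 <= 1 -> g z1 <= g z2.
Proof.
  intros H0 H12 H1.
  destruct (Req_dec z1 z2) as [E | E]; [subst; lra|].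
  apply Rnot_lt_le. intro Hc.
  set (eps := (g z1 - g z2) / 2).
  assert (He : 0 < eps) by (unfold eps; lra).
  destruct (Hcont z1 ltac:(lra) eps He) as (d1 & Hd1 & C1).
  destruct (Hcont z2 ltac:(lra) eps He) as (d2 & Hd2 & C2).
  set (m := Rmin ((z2 - z1) / 2) (Rmin d1 d2)).
  assert (Hm : 0 < m) by (unfold m; repeat apply Rmin_glb_lt; lra).
  assert (Hm1 : m <= (z2 - z1) / 2) by apply Rmin_l.
  assert (Hm2 : m <= d1) by (eapply Rle_trans; [apply Rmin_r | apply Rmin_l]).
  assert (Hm3 : m <= d2) by (eapply Rle_trans; [apply Rmin_r | apply Rmin_r]).
  destruct (exists_ratio_between z1 (z1 + m) ltac:(lra)) as (a & b & Hb & Ha1 & Ha2).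
  destruct (exists_ratio_between (z2 - m) z2 ltac:(lra)) as (c & d & Hd & Hc1 & Hc2).
  assert (Hcd : (c <= d)%nat) by (apply ratio_le_1; auto; lra).
  pose proof (g_ratio_mono a b c d Hb Hd Hcd ltac:(lra)).
  pose proof (C1 (ratio a b) ltac:(lra) ltac:(apply Rabs_def1; lra)) as A1.
  pose proof (C2 (ratio c d) ltac:(lra) ltac:(apply Rabs_def1; lra)) as A2.
  apply Rabs_def2 in A1. apply Rabs_def2 in A2. unfold eps in *. lra.
Qed.

End Monotone.

(** * Estimates with the golden ratio *)

Lemma phi_bounds : 1.618 < phi < 1.61805.
Proof.
  assert (H : 2.236 < sqrt 5 < 2.2361).
  { split; apply Rsqr_incrst_0; try lra; try apply sqrt_pos;
      rewrite Rsqr_sqrt by lra; unfold Rsqr; lra. }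
  unfold phi. lra.
Qed.

Lemma phi_sq : phi ^ 2 = phi + 1.
Proof.
  unfold phi. replace (((1 + sqrt 5) / 2) ^ 2) with ((1 + 2 * sqrt 5 + sqrt 5 * sqrt 5) / 4)
    by field.
  rewrite sqrt_sqrt by lra. field.
Qed.

Lemma phi_pow_pos k : 0 < phi ^ k.
Proof. apply pow_lt. pose proof phi_bounds. lra. Qed.

Lemma tau_eq : tau = (/ phi) ^ 2.
Proof. unfold tau. rewrite pow_inv. reflexivity. Qed.

Lemma inv_phi_add_tau : / phi + tau = 1.
Proof.
  pose proof phi_bounds. unfold tau.
  replace (/ phi) with (phi / phi ^ 2) by (field; lra).
  rewrite phi_sq. field. lra.
Qed.

Lemma inv_phi_bounds : 0 < / phi < 0.625.
Proof.
  pose proof phi_bounds. split; [apply Rinv_0_lt_compat; lra|].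
  apply (Rmult_lt_reg_r phi); [lra|]. rewrite Rinv_l by lra. lra.
Qed.

Lemma tau_bounds : 0.375 < tau < 0.4.
Proof.
  pose proof inv_phi_add_tau. pose proof inv_phi_bounds. pose proof phi_bounds.
  split; [lra|]. unfold tau. rewrite phi_sq.
  apply (Rmult_lt_reg_r (phi + 1)); [lra|]. rewrite Rinv_l by lra. lra.
Qed.

Lemma phi_pow_lin d : 1 + INR d / 2 <= phi ^ d.
Proof.
  pose proof phi_bounds. induction d as [|d IH]; [simpl; lra|].
  rewrite S_INR. simpl. pose proof (pos_INR d). nra.
Qed.

Lemma phi_pow_5 : 11.08 <= phi ^ 5.
Proof.
  pose proof phi_bounds. replace (phi ^ 5) with ((phi ^ 2) ^ 2 * phi) by ring.
  rewrite phi_sq. nra.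
Qed.

Lemma phi_pow_6 : 17.9 <= phi ^ 6.
Proof.
  pose proof phi_pow_5. pose proof phi_bounds.
  replace (phi ^ 6) with (phi ^ 5 * phi) by ring. set (p := phi ^ 5) in *. nra.
Qed.

Lemma phi_pow_7 : 28 <= phi ^ 7.
Proof.
  pose proof phi_pow_6. pose proof phi_bounds.
  replace (phi ^ 7) with (phi ^ 6 * phi) by ring. set (p := phi ^ 6) in *. nra.
Qed.

Lemma inv_phi_pow_6 : / phi ^ 6 <= / 17.
Proof. pose proof phi_pow_6. apply Rinv_le_contravar; lra. Qed.

Lemma inv_phi_pow_scale A C s t : 0 <= t -> t <= s * phi ^ C ->
  (/ phi) ^ (A + C) * t <= (/ phi) ^ A * s.
Proof.
  intros Ht Hts. pose proof (phi_pow_pos C). pose proof (phi_pow_pos A).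
  rewrite pow_add, !pow_inv.
  apply (Rmult_le_reg_r (phi ^ A * phi ^ C)); [nra|].
  replace (/ phi ^ A * / phi ^ C * t * (phi ^ A * phi ^ C)) with t by (field; lra).
  replace (/ phi ^ A * s * (phi ^ A * phi ^ C)) with (s * phi ^ C) by (field; lra).
  exact Hts.
Qed.

Definition golden_weight (a : R) : Prop :=
  (a = / phi /\ 1 - a = tau) \/ (a = tau /\ 1 - a = / phi).

Lemma golden_weight_compl a : golden_weight a -> golden_weight (1 - a).
Proof. intros [[H1 H2] | [H1 H2]]; [right | left]; split; lra. Qed.

Lemma golden_weight_bounds a : golden_weight a -> tau <= a <= / phi /\ tau <= 1 - a <= / phi.
Proof. pose proof inv_phi_bounds; pose proof tau_bounds. intros [[H1 H2] | [H1 H2]]; lra. Qed.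

Lemma golden_weight_half a : golden_weight a -> (1 - a) / phi ^ 6 <= a / 2.
Proof.
  intros H. apply golden_weight_bounds in H. pose proof inv_phi_bounds. pose proof tau_bounds.
  pose proof inv_phi_pow_6. unfold Rdiv. nra.
Qed.

Lemma linear_le_phi_pow k d Qc Qp : (1 <= k)%nat -> 1 <= Qc -> 0 <= Qp ->
  (INR k + INR d + 1) * Qc + Qp <= (INR k * Qc + Qp) * phi ^ (d + 6).
Proof.
  intros Hk HQc HQp.
  assert (Hk1 : 1 <= INR k) by (apply (le_INR 1); lia).
  pose proof (pos_INR d). pose proof (phi_pow_lin d). pose proof phi_pow_6.
  rewrite pow_add. set (P := phi ^ d * phi ^ 6).
  assert (HP : 17 * (1 + INR d / 2) <= P) by (unfold P; nra).
  assert (0 <= INR k * Qc) by nra.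
  assert (INR k * Qc * (17 * (1 + INR d / 2)) <= INR k * Qc * P)
    by (apply Rmult_le_compat_l; lra).
  assert ((INR k + INR d + 1) * Qc <= INR k * Qc * (17 * (1 + INR d / 2))).
  { assert (0 <= 16 * INR k - 1 + INR d * (8.5 * INR k - 1)) by nra. nra. }
  assert (Qp <= Qp * P) by nra.
  lra.
Qed.

Lemma golden_weight_geometric a k N Qc Qp : golden_weight a -> (1 <= k)%nat -> (k + 2 <= N)%nat ->
  1 <= Qc -> 0 <= Qp ->
  a ^ (N - 1) * (INR N * Qc + Qp) / phi ^ 6 <= a ^ k * (INR k * Qc + Qp).
Proof.
  intros Ha Hk HkN HQc HQp. apply golden_weight_bounds in Ha as [[Ha1 Ha2] _].
  pose proof inv_phi_bounds. pose proof tau_bounds.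
  set (d := (N - 1 - k)%nat).
  assert (HN : INR N = INR k + INR d + 1).
  { rewrite <- plus_INR, <- S_INR. f_equal. unfold d. lia. }
  assert (Hk1 : 1 <= INR k) by (apply (le_INR 1); lia).
  pose proof (pos_INR d).
  assert (Had : a ^ d <= (/ phi) ^ d) by (apply pow_incr; lra).
  assert (Hak : 0 <= a ^ k) by (apply pow_le; lra).
  assert (Hlin : INR N * Qc + Qp <= (INR k * Qc + Qp) * phi ^ (d + 6))
    by (rewrite HN; apply linear_le_phi_pow; auto).
  set (X := INR N * Qc + Qp) in *.
  assert (HX : 0 <= X) by (unfold X; rewrite HN; nra).
  pose proof (inv_phi_pow_scale 0 (d + 6) _ _ HX Hlin) as Hs.
  rewrite Nat.add_0_l, pow_O, Rmult_1_l, pow_add in Hs.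
  assert (Hd6 : a ^ d * X / phi ^ 6 <= (/ phi) ^ d * (/ phi) ^ 6 * X).
  { rewrite (pow_inv phi 6). pose proof (phi_pow_pos 6).
    assert (0 <= X * / phi ^ 6)
      by (apply Rmult_le_pos; [lra | apply Rlt_le, Rinv_0_lt_compat; lra]).
    assert (0 <= ((/ phi) ^ d - a ^ d) * (X * / phi ^ 6)) by (apply Rmult_le_pos; lra).
    unfold Rdiv. nra. }
  replace (N - 1)%nat with (k + d)%nat by (unfold d; lia).
  replace (a ^ (k + d) * X / phi ^ 6) with (a ^ k * (a ^ d * X / phi ^ 6))
    by (rewrite pow_add; field; pose proof phi_bounds; lra).
  apply Rmult_le_compat_l; lra.
Qed.

Lemma inv_phi_two_chains j N : (1 <= j)%nat -> (j <= N)%nat ->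
  (/ phi) ^ (N + 7) * (INR N + 1) <= ((/ phi) ^ N + (/ phi) ^ (2 * j)) * INR j / 2.
Proof.
  intros Hj HjN.
  pose proof inv_phi_bounds. pose proof phi_pow_7. pose proof (pos_INR N).
  assert (Hj1 : 1 <= INR j) by (apply (le_INR 1); lia).
  pose proof (pow_le (/ phi) N ltac:(lra)). pose proof (pow_le (/ phi) (2 * j) ltac:(lra)).
  destruct (le_lt_dec (N + 1) (2 * j)) as [C | C].
  - assert (HC : INR N + 1 <= 2 * INR j).
    { rewrite <- S_INR. replace 2 with (INR 2) by reflexivity.
      rewrite <- mult_INR. apply le_INR. lia. }
    pose proof (inv_phi_pow_scale N 7 (INR j / 2) (INR N + 1) ltac:(lra) ltac:(nra)).
    nra.
  - set (d := (N - 2 * j)%nat).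
    assert (HNd : INR N = 2 * INR j + INR d).
    { replace N with (2 * j + d)%nat at 1 by (unfold d; lia).
      rewrite plus_INR, mult_INR. reflexivity. }
    pose proof (phi_pow_lin d). pose proof (pos_INR d).
    assert (HP : 28 * (1 + INR d / 2) <= phi ^ (d + 7))
      by (rewrite pow_add; pose proof (phi_pow_pos d); nra).
    replace (N + 7)%nat with (2 * j + (d + 7))%nat by (unfold d; lia).
    pose proof (inv_phi_pow_scale (2 * j) (d + 7) (INR j / 2) (INR N + 1) ltac:(lra) ltac:(nra)).
    nra.
Qed.

Lemma tau_two_chains j N : (1 <= j)%nat -> (j <= N)%nat ->
  (/ phi) ^ (N + (N + 5)) * (INR N + 1) <= ((/ phi) ^ (2 * N) + (/ phi) ^ j) * INR j / 2.
Proof.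
  intros Hj HjN.
  pose proof inv_phi_bounds.
  assert (Hj1 : 1 <= INR j) by (apply (le_INR 1); lia).
  pose proof (phi_pow_lin N). pose proof phi_pow_5. pose proof (pos_INR N).
  assert (HP : 11 * (1 + INR N / 2) <= phi ^ (N + 5))
    by (rewrite pow_add; pose proof (phi_pow_pos N); nra).
  pose proof (inv_phi_pow_scale N (N + 5) (/ 2) (INR N + 1) ltac:(lra) ltac:(nra)).
  assert ((/ phi) ^ N <= (/ phi) ^ j).
  { replace N with (j + (N - j))%nat by lia. rewrite pow_add.
    pose proof (pow_le (/ phi) j ltac:(lra)).
    assert ((/ phi) ^ (N - j) <= 1) by (rewrite <- (pow1 (N - j)); apply pow_incr; lra).
    nra. }
  pose proof (pow_le (/ phi) (2 * N) ltac:(lra)). pose proof (pow_le (/ phi) N ltac:(lra)).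
  nra.
Qed.

Lemma golden_weight_two_chains a j N : golden_weight a -> (1 <= j)%nat -> (j <= N)%nat ->
  a ^ (N - 1) * (1 - a) * (INR N + 1) / phi ^ 6 <= (a ^ N + (1 - a) ^ j) * INR j / 2.
Proof.
  intros Ha Hj HjN. pose proof phi_bounds.
  replace (a ^ (N - 1) * (1 - a) * (INR N + 1) / phi ^ 6)
    with ((/ phi) ^ 6 * (a ^ (N - 1) * (1 - a) * (INR N + 1))) by (rewrite pow_inv; field; lra).
  destruct Ha as [[-> ->] | [-> ->]]; rewrite tau_eq, <- !pow_mult.
  - replace ((/ phi) ^ 6 * ((/ phi) ^ (N - 1) * (/ phi) ^ 2 * (INR N + 1)))
      with ((/ phi) ^ (N + 7) * (INR N + 1))
      by (replace (N + 7)%nat with (6 + (N - 1 + 2))%nat by lia; rewrite !pow_add; ring).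
    apply inv_phi_two_chains; assumption.
  - replace ((/ phi) ^ 6 * ((/ phi) ^ (2 * (N - 1)) * (/ phi) * (INR N + 1)))
      with ((/ phi) ^ (N + (N + 5)) * (INR N + 1))
      by (replace (N + (N + 5))%nat with (6 + (2 * (N - 1) + 1))%nat by lia;
          rewrite !pow_add; ring).
    apply tau_two_chains; assumption.
Qed.

Lemma diff_quot_ge gx gy x y Ms Ln e : (e = 1 \/ e = -1) ->
  0 <= Ms -> Ms <= e * (gy - gx) -> 0 < e * (y - x) -> e * (y - x) <= Ln ->
  Ms / Ln <= (gy - gx) / (y - x).
Proof.
  intros He H1 H2 H3 H4.
  replace ((gy - gx) / (y - x)) with ((e * (gy - gx)) / (e * (y - x)))
    by (field; destruct He; subst; lra).
  unfold Rdiv. apply Rle_trans with (Ms * / (e * (y - x))).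
  - apply Rmult_le_compat_l; auto. apply Rinv_le_contravar; lra.
  - apply Rmult_le_compat_r; [|lra]. left. apply Rinv_0_lt_compat. lra.
Qed.

Lemma diff_quot_sym gx gy x y : (gy - gx) / (y - x) = (gx - gy) / (x - y).
Proof.
  destruct (Req_dec y x) as [-> | H].
  - unfold Rminus. rewrite !Rplus_opp_r, !Rdiv_0_r. reflexivity.
  - field. lra.
Qed.

Lemma diff_quot_ge_split gx gy gE x y E A B a b e : (e = 1 \/ e = -1) ->
  0 <= A -> A <= e * (gx - gE) -> 0 <= B -> B <= e * (gE - gy) ->
  0 < e * (x - E) -> e * (x - E) <= a -> 0 < e * (E - y) -> e * (E - y) <= b ->
  (A + B) / (a + b) <= (gy - gx) / (y - x).
Proof.
  intros He HA HA' HB HB' Hs Hs' Ht Ht'.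
  apply (diff_quot_ge gx gy x y (A + B) (a + b) (- e)); [destruct He; [right | left] | ..]; lra.
Qed.

Lemma sum_ratio_ge S a b : 0 <= S -> 0 < a -> a <= b -> S / (2 * b) <= S / (a + b).
Proof.
  intros HS Ha Hab. unfold Rdiv.
  apply Rmult_le_compat_l; [lra|]. apply Rinv_le_contravar; lra.
Qed.

Lemma exists_inv_nat_bracket v : 0 < v <= 1 ->
  exists k : nat, (1 <= k)%nat /\ / INR (S k) < v <= / INR k.
Proof.
  intros Hv. set (z := / v).
  assert (Ev : v = / z) by (unfold z; rewrite Rinv_inv; reflexivity).
  assert (Hz : 1 <= z) by (unfold z; rewrite <- Rinv_1; apply Rinv_le_contravar; lra).
  pose proof (base_Int_part z) as [B1 B2].
  assert (H0 : (0 < Int_part z)%Z) by (apply lt_IZR; simpl; lra).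
  exists (Z.to_nat (Int_part z)).
  assert (E : INR (Z.to_nat (Int_part z)) = IZR (Int_part z))
    by (rewrite INR_IZR_INZ, Z2Nat.id by lia; reflexivity).
  assert (Hk : (1 <= Z.to_nat (Int_part z))%nat).
  { apply INR_le. rewrite E. apply (IZR_le 1). lia. }
  assert (Hk1 : 1 <= IZR (Int_part z)) by (rewrite <- E; apply (le_INR 1); exact Hk).
  split; [exact Hk|]. rewrite S_INR, E, Ev. split.
  - apply Rinv_lt_contravar; [apply Rmult_lt_0_compat|]; lra.
  - apply Rinv_le_contravar; lra.
Qed.

Lemma Rinv_INR_le m n : (1 <= m <= n)%nat -> / INR n <= / INR m.
Proof.
  intros H. apply Rinv_le_contravar; [apply (lt_INR 0); lia | apply le_INR; lia].
Qed.

Lemma between_01 e a b c : (e = 1 \/ e = -1) -> 0 <= a <= 1 -> 0 <= c <= 1 ->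
  0 <= e * (b - a) -> 0 <= e * (c - b) -> 0 <= b <= 1.
Proof. intros [-> | ->] ? ? ? ?; lra. Qed.

Lemma two_sided_bound_near a M Q Qm N : golden_weight a -> 0 <= M -> 0 < Q -> 0 <= Qm ->
  (1 <= N)%nat ->
  M * a ^ (N - 1) * (1 - a) * (INR N * Q + Qm) * Q / phi ^ 6 <=
  M * a ^ N / (2 * / (Q * (Q * INR N + Qm))).
Proof.
  intros Ha HM HQ HQm HN.
  pose proof (golden_weight_half a Ha) as Hhalf. apply golden_weight_bounds in Ha.
  pose proof tau_bounds. pose proof phi_bounds. pose proof (pos_INR N).
  assert (1 <= INR N) by (apply (le_INR 1); lia).
  assert (0 < Q * INR N + Qm) by nra.
  assert (HK : 0 <= M * a ^ (N - 1) * ((INR N * Q + Qm) * Q))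
    by (apply Rmult_le_pos; [apply Rmult_le_pos; [|apply pow_le]|]; nra).
  assert (EaN : a ^ N = a ^ (N - 1) * a)
    by (replace N with (S (N - 1)) at 1 by lia; simpl; ring).
  replace (M * a ^ N / (2 * / (Q * (Q * INR N + Qm))))
    with (M * a ^ (N - 1) * ((INR N * Q + Qm) * Q) * (a / 2))
    by (rewrite EaN; field; repeat split; lra).
  replace (M * a ^ (N - 1) * (1 - a) * (INR N * Q + Qm) * Q / phi ^ 6)
    with (M * a ^ (N - 1) * ((INR N * Q + Qm) * Q) * ((1 - a) / phi ^ 6))
    by (field; lra).
  apply Rmult_le_compat_l; assumption.
Qed.

Lemma two_sided_bound_far a M Q Qm N J : golden_weight a -> 0 <= M -> 1 <= Q -> 0 <= Qm <= Q ->
  (1 <= N)%nat -> (2 <= J)%nat -> (J - 1 <= N)%nat ->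
  M * a ^ (N - 1) * (1 - a) * (INR N * Q + Qm) * Q / phi ^ 6 <=
  (M * a ^ N + M * (1 - a) ^ (J - 1)) / (2 * / (Q * (Q * INR J - Qm))).
Proof.
  intros Ha HM HQ HQm HN HJ HJN.
  pose proof (golden_weight_two_chains a (J - 1) N Ha ltac:(lia) HJN) as Hchains.
  apply golden_weight_bounds in Ha. pose proof tau_bounds. pose proof phi_bounds.
  assert (EJ : INR (J - 1) = INR J - 1) by (rewrite minus_INR by lia; reflexivity).
  rewrite EJ in Hchains.
  assert (HJ2 : 2 <= INR J) by (apply (le_INR 2); lia).
  assert (Hpos : 0 <= a ^ N + (1 - a) ^ (J - 1))
    by (apply Rplus_le_le_0_compat; apply pow_le; lra).
  assert (Hlen : Q * Q * (INR J - 1) <= Q * (Q * INR J - Qm)) by nra.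
  replace ((M * a ^ N + M * (1 - a) ^ (J - 1)) / (2 * / (Q * (Q * INR J - Qm))))
    with (M * ((a ^ N + (1 - a) ^ (J - 1)) / 2) * (Q * (Q * INR J - Qm)))
    by (field; nra).
  apply Rle_trans with (M * ((a ^ N + (1 - a) ^ (J - 1)) / 2) * (Q * Q * (INR J - 1))).
  2: { apply Rmult_le_compat_l; [apply Rmult_le_pos; lra | exact Hlen]. }
  replace (M * ((a ^ N + (1 - a) ^ (J - 1)) / 2) * (Q * Q * (INR J - 1)))
    with (M * (Q * Q) * ((a ^ N + (1 - a) ^ (J - 1)) * (INR J - 1) / 2)) by field.
  apply Rle_trans with (M * (Q * Q) * (a ^ (N - 1) * (1 - a) * (INR N + 1) / phi ^ 6)).
  2: { apply Rmult_le_compat_l; [nra | exact Hchains]. }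
  assert (0 <= M * a ^ (N - 1) * (1 - a) / phi ^ 6).
  { unfold Rdiv. apply Rmult_le_pos; [apply Rmult_le_pos; [apply Rmult_le_pos; [|apply pow_le]|]|];
      try lra. apply Rlt_le, Rinv_0_lt_compat, phi_pow_pos. }
  replace (M * a ^ (N - 1) * (1 - a) * (INR N * Q + Qm) * Q / phi ^ 6)
    with (M * a ^ (N - 1) * (1 - a) / phi ^ 6 * ((INR N * Q + Qm) * Q)) by (field; lra).
  replace (M * (Q * Q) * (a ^ (N - 1) * (1 - a) * (INR N + 1) / phi ^ 6))
    with (M * a ^ (N - 1) * (1 - a) / phi ^ 6 * ((INR N + 1) * (Q * Q))) by (field; lra).
  apply Rmult_le_compat_l; [assumption | nra].
Qed.

Lemma two_sided_bound a M Q Qm N J : golden_weight a -> 0 <= M -> 1 <= Q -> 0 <= Qm <= Q ->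
  (1 <= N)%nat -> (2 <= J)%nat ->
  M * a ^ (N - 1) * (1 - a) * (INR N * Q + Qm) * Q / phi ^ 6 <=
  (M * a ^ N + M * (1 - a) ^ (J - 1)) / (/ (Q * (Q * INR N + Qm)) + / (Q * (Q * INR J - Qm))).
Proof.
  intros Ha HM HQ HQm HN HJ.
  pose proof (golden_weight_bounds a Ha). pose proof tau_bounds.
  assert (HJ2 : 2 <= INR J) by (apply (le_INR 2); lia).
  assert (HN1 : 1 <= INR N) by (apply (le_INR 1); lia).
  set (A := M * a ^ N). set (B := M * (1 - a) ^ (J - 1)).
  assert (HA : 0 <= A) by (apply Rmult_le_pos; [|apply pow_le]; lra).
  assert (HB : 0 <= B) by (apply Rmult_le_pos; [|apply pow_le]; lra).
  assert (Hda : 0 < Q * (Q * INR N + Qm)) by nra.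
  assert (Hdb : 0 < Q * (Q * INR J - Qm)) by nra.
  set (la := / (Q * (Q * INR N + Qm))). set (lb := / (Q * (Q * INR J - Qm))).
  assert (Hla : 0 < la) by (apply Rinv_0_lt_compat; lra).
  assert (Hlb : 0 < lb) by (apply Rinv_0_lt_compat; lra).
  destruct (Rle_lt_dec lb la) as [C | C].
  - rewrite (Rplus_comm la lb). eapply Rle_trans; [|apply sum_ratio_ge; lra].
    eapply Rle_trans; [apply two_sided_bound_near; auto; lra|].
    unfold Rdiv. apply Rmult_le_compat_r; [apply Rlt_le, Rinv_0_lt_compat; lra | unfold A; lra].
  - assert (HJN : (J - 1 <= N)%nat).
    { assert (Q * INR J - Qm < Q * INR N + Qm).
      { apply Rnot_le_lt. intro Hc. unfold la, lb in C.
        pose proof (Rinv_le_contravar (Q * (Q * INR N + Qm)) (Q * (Q * INR J - Qm)) Hda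
          ltac:(apply Rmult_le_compat_l; lra)).
        lra. }
      assert (HJ' : INR J < INR (N + 2)) by (rewrite plus_INR; simpl; nra).
      apply INR_lt in HJ'. lia. }
    eapply Rle_trans; [|apply sum_ratio_ge; lra].
    apply two_sided_bound_far; auto.
Qed.

Lemma far_bound a M Q Qm N k : golden_weight a -> 0 <= M -> 1 <= Q -> 0 <= Qm ->
  (1 <= k)%nat -> (k + 2 <= N)%nat ->
  M * a ^ (N - 1) * (1 - a) * (INR N * Q + Qm) * Q / phi ^ 6 <=
  M * a ^ k * (1 - a) / / (Q * (Q * INR k + Qm)).
Proof.
  intros Ha HM HQ HQm Hk HkN.
  pose proof (golden_weight_geometric a k N Q Qm Ha Hk HkN HQ HQm) as G.
  apply golden_weight_bounds in Ha. pose proof tau_bounds. pose proof phi_bounds.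
  assert (1 <= INR k) by (apply (le_INR 1); lia).
  assert (HK : 0 <= M * (1 - a) * Q) by (apply Rmult_le_pos; [apply Rmult_le_pos |]; lra).
  replace (M * a ^ k * (1 - a) / / (Q * (Q * INR k + Qm)))
    with (M * (1 - a) * Q * (a ^ k * (INR k * Q + Qm)))
    by (field; split; apply Rgt_not_eq; nra).
  replace (M * a ^ (N - 1) * (1 - a) * (INR N * Q + Qm) * Q / phi ^ 6)
    with (M * (1 - a) * Q * (a ^ (N - 1) * (INR N * Q + Qm) / phi ^ 6)) by (field; lra).
  apply Rmult_le_compat_l; assumption.
Qed.

Lemma near_bound a M Q Qm N : golden_weight a -> 0 <= M -> 1 <= Q -> 0 <= Qm -> 1 <= N ->
  M * (N * Q + Qm) * Q / phi ^ 6 <= M * (1 - a) / / (Q * (Q * N + Qm)).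
Proof.
  intros Ha HM HQ HQm HN.
  apply golden_weight_bounds in Ha. pose proof tau_bounds. pose proof inv_phi_pow_6.
  assert (HK : 0 <= M * ((N * Q + Qm) * Q)) by (apply Rmult_le_pos; nra).
  replace (M * (1 - a) / / (Q * (Q * N + Qm))) with (M * ((N * Q + Qm) * Q) * (1 - a))
    by (field; split; apply Rgt_not_eq; nra).
  replace (M * (N * Q + Qm) * Q / phi ^ 6) with (M * ((N * Q + Qm) * Q) * / phi ^ 6)
    by (unfold Rdiv; ring).
  apply Rmult_le_compat_l; lra.
Qed.

Lemma prev_close_bound M Q1 Q0 R : 0 <= M -> 0 <= Q1 -> 0 <= Q0 <= R ->
  M * Q1 * Q0 / phi ^ 6 <= M * Q1 * R / 2.
Proof.
  intros HM HQ1 HQ0. pose proof inv_phi_pow_6. pose proof (Rmult_le_pos _ _ HM HQ1).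
  assert (Q0 * / phi ^ 6 <= R / 2) by nra.
  replace (M * Q1 * R / 2) with (M * Q1 * (R / 2)) by (unfold Rdiv; ring).
  unfold Rdiv at 1. rewrite Rmult_assoc. apply Rmult_le_compat_l; lra.
Qed.

Lemma one_close_bound a M Q1 Q0 : golden_weight a -> 0 <= M -> 0 <= Q1 -> 0 <= Q0 ->
  M * Q1 * Q0 / phi ^ 6 <= M * (1 - a) * (Q1 + Q0) * Q0 / 2.
Proof.
  intros Ha HM HQ1 HQ0.
  apply golden_weight_bounds in Ha. pose proof tau_bounds. pose proof inv_phi_pow_6.
  assert (HK : 0 <= M * Q1 * Q0) by (apply Rmult_le_pos; [apply Rmult_le_pos |]; lra).
  assert (0 <= M * Q0 * Q0) by (apply Rmult_le_pos; [apply Rmult_le_pos |]; lra).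
  assert (M * Q1 * Q0 * / phi ^ 6 <= M * Q1 * Q0 * ((1 - a) / 2))
    by (apply Rmult_le_compat_l; lra).
  assert (0 <= M * Q0 * Q0 * ((1 - a) / 2)) by (apply Rmult_le_pos; lra).
  unfold Rdiv in *. nra.
Qed.

Lemma golden_weight_01 a : golden_weight a -> 0 < a < 1.
Proof.
  intros Ha. apply golden_weight_bounds in Ha. pose proof tau_bounds. pose proof inv_phi_bounds.
  lra.
Qed.

Lemma inv_sub_window N v : 2 <= N -> / N < v <= / (N - 1) ->
  0 < v <= 1 /\ -1 <= / v - N < 0.
Proof.
  intros HN [Hv1 Hv2].
  assert (Hv0 : 0 < v) by (eapply Rlt_trans; [|exact Hv1]; apply Rinv_0_lt_compat; lra).
  split; [split; [exact Hv0|] | split].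
  - apply Rle_trans with (/ (N - 1)); [exact Hv2|].
    rewrite <- Rinv_1. apply Rinv_le_contravar; lra.
  - assert (H : / / (N - 1) <= / v) by (apply Rinv_le_contravar; lra).
    rewrite Rinv_inv in H. lra.
  - assert (H : / v < / / N)
      by (apply Rinv_lt_contravar; [apply Rmult_lt_0_compat; [apply Rinv_0_lt_compat|]|]; lra).
    rewrite Rinv_inv in H. lra.
Qed.

Lemma shift_one_window N v : 1 <= N -> 0 <= v < / (N + 1) ->
  0 < 1 - N * v /\ v <= 1 /\ -1 <= v / (1 - N * v) - 1 < 0.
Proof.
  intros HN [Hv0 Hv].
  assert (Hv1 : v * (N + 1) < 1).
  { apply (Rmult_lt_compat_r (N + 1)) in Hv; [|lra]. rewrite Rinv_l in Hv by lra. lra. }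
  assert (Hd : 0 < 1 - N * v) by nra.
  split; [exact Hd | split; [nra | split]].
  - assert (0 <= v / (1 - N * v))
      by (apply Rmult_le_pos; [lra | apply Rlt_le, Rinv_0_lt_compat; lra]).
    lra.
  - assert (v / (1 - N * v) < 1); [|lra].
    apply (Rmult_lt_reg_r (1 - N * v)); auto. unfold Rdiv.
    rewrite Rmult_assoc, Rinv_l by lra. nra.
Qed.

(** * Continued fractions and cylinders *)

(** [cf_ppair x n = (p_{n-1}, p_n)], numerators of the convergents, with [p_{-1} = 1]. *)
Fixpoint cf_ppair (x : R) (n : nat) : nat * nat :=
  match n with
  | O => (1%nat, 0%nat)
  | S n' => let (pm, pc) := cf_ppair x n' in (pc, (cf_digit x n * pc + pm)%nat)
  end.

Definition cf_p (x : R) (n : nat) : nat := snd (cf_ppair x n).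
Definition cf_p_prev (x : R) (n : nat) : nat := fst (cf_ppair x n).
Definition cf_q_prev (x : R) (n : nat) : nat := fst (cf_qpair x n).

Lemma cf_p_prev_S x n : cf_p_prev x (S n) = cf_p x n.
Proof. unfold cf_p_prev, cf_p. simpl. destruct (cf_ppair x n). reflexivity. Qed.

Lemma cf_p_S x n : cf_p x (S n) = (cf_digit x (S n) * cf_p x n + cf_p_prev x n)%nat.
Proof. unfold cf_p_prev, cf_p. simpl. destruct (cf_ppair x n). reflexivity. Qed.

Lemma cf_q_prev_S x n : cf_q_prev x (S n) = cf_q x n.
Proof. unfold cf_q_prev, cf_q. simpl. destruct (cf_qpair x n). reflexivity. Qed.

Lemma cf_q_S x n : cf_q x (S n) = (cf_digit x (S n) * cf_q x n + cf_q_prev x n)%nat.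
Proof. unfold cf_q_prev, cf_q. simpl. destruct (cf_qpair x n). reflexivity. Qed.

Definition alt_sign (n : nat) : R := if Nat.even n then 1 else -1.

Lemma alt_sign_cases n : alt_sign n = 1 \/ alt_sign n = -1.
Proof. unfold alt_sign. destruct (Nat.even n); auto. Qed.

Lemma alt_sign_S n : alt_sign (S n) = - alt_sign n.
Proof.
  unfold alt_sign. rewrite Nat.even_succ, <- Nat.negb_even. destruct (Nat.even n); simpl; ring.
Qed.

Lemma cf_det_cases x n :
  (Nat.even n = true /\ (cf_p_prev x n * cf_q x n = cf_p x n * cf_q_prev x n + 1)%nat) \/
  (Nat.even n = false /\ (cf_p x n * cf_q_prev x n = cf_p_prev x n * cf_q x n + 1)%nat).
Proof.
  induction n as [|n IH]; [left; split; reflexivity|].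
  rewrite cf_p_prev_S, cf_q_prev_S, cf_p_S, cf_q_S, Nat.even_succ, <- Nat.negb_even.
  destruct IH as [[E D] | [E D]]; rewrite E; [right | left]; (split; [reflexivity | nia]).
Qed.

Lemma cf_det x n :
  INR (cf_p_prev x n) * INR (cf_q x n) - INR (cf_p x n) * INR (cf_q_prev x n) = alt_sign n.
Proof.
  unfold alt_sign. rewrite <- !mult_INR.
  destruct (cf_det_cases x n) as [[E D] | [E D]]; rewrite E, D, plus_INR; simpl; ring.
Qed.

(** The Moebius map [w |-> (p_n + p_{n-1} w) / (q_n + q_{n-1} w)]; it sends [T^n x] to [x]
    and [[0, 1]] onto the cylinder of rank [n] containing [x]. *)
Definition conv_map (x : R) (n : nat) (w : R) : R :=
  (INR (cf_p x n) + INR (cf_p_prev x n) * w) / (INR (cf_q x n) + INR (cf_q_prev x n) * w).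

Lemma conv_map_sub x n w1 w2 :
  INR (cf_q x n) + INR (cf_q_prev x n) * w1 <> 0 ->
  INR (cf_q x n) + INR (cf_q_prev x n) * w2 <> 0 ->
  alt_sign n * (conv_map x n w2 - conv_map x n w1) =
    (w2 - w1) / ((INR (cf_q x n) + INR (cf_q_prev x n) * w1) *
                 (INR (cf_q x n) + INR (cf_q_prev x n) * w2)).
Proof.
  intros H1 H2.
  assert (E : conv_map x n w2 - conv_map x n w1 = alt_sign n * (w2 - w1) /
    ((INR (cf_q x n) + INR (cf_q_prev x n) * w1) * (INR (cf_q x n) + INR (cf_q_prev x n) * w2))).
  { rewrite <- (cf_det x n). unfold conv_map. field. auto. }
  rewrite E. destruct (alt_sign_cases n) as [-> | ->]; field; auto.
Qed.

Lemma irrational_neq0 y : irrational y -> y <> 0.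
Proof. intros H E. apply (H 0%Z 1%Z); [lia|]. rewrite E. simpl. field. Qed.

Lemma irrational_inv y : irrational y -> irrational (/ y).
Proof.
  intros H p q Hq E.
  assert (Hy : y <> 0) by (apply irrational_neq0; auto).
  assert (Hp : p <> 0%Z).
  { intro; subst. unfold Rdiv in E. rewrite Rmult_0_l in E.
    exact (Rinv_neq_0_compat y Hy E). }
  apply (H q p Hp).
  assert (IZR q <> 0) by (apply not_0_IZR; auto).
  assert (IZR p <> 0) by (apply not_0_IZR; auto).
  rewrite <- (Rinv_inv y), E. field; auto.
Qed.

Lemma irrational_sub_int y k : irrational y -> irrational (y - IZR k).
Proof.
  intros H p q Hq E. apply (H (p + k * q)%Z q Hq).
  assert (IZR q <> 0) by (apply not_0_IZR; auto).
  rewrite plus_IZR, mult_IZR. replace y with (y - IZR k + IZR k) by ring. rewrite E. field; auto.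
Qed.

Section MediantChain.

Variables (lam : R) (g : R -> R).
Hypothesis Hrec : mediant_rec lam g.

(* Iterated mediants of pu/qu with a Farey neighbour pv/qv: the weight [f] is that of the
   side on which pv/qv lies. *)
Lemma g_mediant_chain pu qu pv qv f :
  (pu <= qu)%nat -> (pv <= qv)%nat -> (0 < qu)%nat -> (0 < qv)%nat ->
  ((pv * qu = pu * qv + 1)%nat /\ f = lam) \/ ((pu * qv = pv * qu + 1)%nat /\ f = 1 - lam) ->
  forall i, g (ratio (i * pu + pv) (i * qu + qv)) - g (ratio pu qu) =
            (g (ratio pv qv) - g (ratio pu qu)) * f ^ i.
Proof.
  intros H1 H2 H3 H4 Hf i. induction i as [|i IH]; [simpl; ring|].
  rewrite <- tech_pow_Rmult.
  replace ((g (ratio pv qv) - g (ratio pu qu)) * (f * f ^ i))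
    with (f * ((g (ratio pv qv) - g (ratio pu qu)) * f ^ i)) by ring.
  rewrite <- IH. unfold ratio in *.
  destruct Hf as [[D ->] | [D ->]].
  - pose proof (Hrec pu qu (i * pu + pv)%nat (i * qu + qv)%nat H3 ltac:(lia) ltac:(nia)
      ltac:(nia)) as E.
    replace (pu + (i * pu + pv))%nat with (S i * pu + pv)%nat in E by lia.
    replace (qu + (i * qu + qv))%nat with (S i * qu + qv)%nat in E by lia.
    rewrite E. ring.
  - pose proof (Hrec (i * pu + pv)%nat (i * qu + qv)%nat pu qu ltac:(lia) H3 H1 ltac:(nia)) as E.
    replace (i * pu + pv + pu)%nat with (S i * pu + pv)%nat in E by lia.
    replace (i * qu + qv + qu)%nat with (S i * qu + qv)%nat in E by lia.
    rewrite E. ring.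
Qed.

End MediantChain.

(** The cylinder of rank [n] containing [x] is [conv_map x n [0, 1]]; its sub-cylinders
    of rank [n + 1] are the images of [[1/(k+1), 1/k]], and they carry the fraction
    [cyl_weight lam n ^ (k - 1) * (1 - cyl_weight lam n)] of its [g]-mass. *)
Definition cyl_weight (lam : R) (n : nat) : R := if Nat.even n then lam else 1 - lam.

Definition cyl_incr (g : R -> R) (x : R) (n : nat) : R :=
  g (conv_map x n 1) - g (conv_map x n 0).

Definition cyl_mass (g : R -> R) (x : R) (n : nat) : R := Rabs (cyl_incr g x n).

Lemma cyl_mass_nonneg g x n : 0 <= cyl_mass g x n.
Proof. apply Rabs_pos. Qed.

Lemma cyl_weight_bounds lam n : 0 < lam < 1 -> 0 < cyl_weight lam n < 1.
Proof. unfold cyl_weight. destruct (Nat.even n); lra. Qed.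

Lemma cyl_incr_0 g x : g 0 = 0 -> g 1 = 1 -> cyl_incr g x 0 = 1.
Proof.
  intros G0 G1. unfold cyl_incr, conv_map. simpl.
  replace ((0 + 1 * 1) / (1 + 0 * 1)) with 1 by field.
  replace ((0 + 1 * 0) / (1 + 0 * 0)) with 0 by field. lra.
Qed.

Definition quot_target (g : R -> R) (x : R) (t : nat) : R :=
  cyl_mass g x t * INR (cf_q x t) * INR (cf_q_prev x t) / phi ^ 6.

Lemma exists_last_true (P : nat -> Prop) B : P 0%nat -> ~ P B -> exists n, P n /\ ~ P (S n).
Proof.
  induction B as [|B IH]; intros H0 HB; [contradiction|].
  destruct (classic (P B)) as [HP | HP]; [exists B; auto | apply IH; auto].
Qed.

Definition in_cyl (x : R) (n : nat) (y : R) : Prop :=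
  exists v, 0 <= v <= 1 /\ y = conv_map x n v.

Section Expansion.

Variable x : R.
Hypothesis Hx : 0 < x < 1.
Hypothesis Hirr : irrational x.

Local Notation u n := (gauss_iter n x).
Local Notation a n := (cf_digit x (S n)).
Local Notation h n w := (conv_map x n w).
Local Notation Q n := (INR (cf_q x n)).
Local Notation Qm n := (INR (cf_q_prev x n)).

Lemma gauss_iter_bounds n : 0 < u n < 1 /\ irrational (u n).
Proof.
  induction n as [|n [[H0 H1] Hi]]; [auto|].
  simpl. unfold gauss, floorZ.
  pose proof (irrational_sub_int _ (Int_part (/ u n)) (irrational_inv _ Hi)) as Hi'.
  split; [|exact Hi'].
  pose proof (base_Int_part (/ u n)) as [B1 B2].
  pose proof (irrational_neq0 _ Hi'). lra.
Qed.

Lemma cf_digit_spec n :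
  INR (a n) = IZR (Int_part (/ u n)) /\ u (S n) = / u n - INR (a n).
Proof.
  pose proof (gauss_iter_bounds n) as [[H0 H1] _].
  pose proof (base_Int_part (/ u n)) as [B1 B2].
  assert (Hg : 1 < / u n) by (rewrite <- Rinv_1; apply Rinv_lt_contravar; lra).
  assert (Hf : (0 <= Int_part (/ u n))%Z) by (apply le_IZR; simpl; lra).
  assert (E : INR (a n) = IZR (Int_part (/ u n))).
  { unfold cf_digit. replace (S n - 1)%nat with n by lia.
    unfold floorZ. rewrite INR_IZR_INZ, Z2Nat.id; auto. }
  split; auto. simpl. unfold gauss, floorZ. rewrite E. reflexivity.
Qed.

Lemma cf_digit_bounds n : (1 <= a n)%nat /\ INR (a n) < / u n < INR (a n) + 1.
Proof.
  pose proof (gauss_iter_bounds n) as [[H0 H1] _].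
  pose proof (gauss_iter_bounds (S n)) as [[H2 H3] _].
  destruct (cf_digit_spec n) as [E1 E2].
  assert (Hg : 1 < / u n) by (rewrite <- Rinv_1; apply Rinv_lt_contravar; lra).
  split; [|lra].
  apply INR_le. rewrite E1. simpl.
  pose proof (base_Int_part (/ u n)) as [B1 B2].
  assert (H : (0 < Int_part (/ u n))%Z) by (apply lt_IZR; simpl; lra).
  apply (IZR_le 1). lia.
Qed.

Lemma cf_continuant_bounds n :
  (1 <= cf_q x n)%nat /\ (cf_q_prev x n <= cf_q x n)%nat /\ (cf_p x n <= cf_q x n)%nat /\
  (cf_p_prev x n + cf_p x n <= cf_q_prev x n + cf_q x n)%nat /\ (n <= cf_q x n)%nat /\
  (0 < n -> 1 <= cf_q_prev x n /\ cf_p_prev x n <= cf_q_prev x n)%nat.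
Proof.
  induction n as [|n (I1 & I2 & I3 & I4 & I5 & I6)]; [cbn; repeat split; lia|].
  rewrite cf_p_prev_S, cf_q_prev_S, cf_p_S, cf_q_S.
  pose proof (proj1 (cf_digit_bounds n)).
  destruct n; [cbn in *; repeat split; nia|].
  specialize (I6 ltac:(lia)). repeat split; nia.
Qed.

Lemma Q_ge1 n : 1 <= Q n.
Proof. apply (le_INR 1). apply cf_continuant_bounds. Qed.

Lemma Qm_ge0 n : 0 <= Qm n.
Proof. apply pos_INR. Qed.

Lemma Qm_le_Q n : Qm n <= Q n.
Proof. apply le_INR. apply cf_continuant_bounds. Qed.

Lemma conv_map_den_pos n w : 0 <= w -> 0 < Q n + Qm n * w.
Proof. intros Hw. pose proof (Q_ge1 n). pose proof (Qm_ge0 n). nra. Qed.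

Lemma conv_map_S n z : 0 < INR (a n) + z ->
  conv_map x (S n) z = conv_map x n (/ (INR (a n) + z)).
Proof.
  intros Hz. unfold conv_map.
  rewrite cf_p_prev_S, cf_q_prev_S, cf_p_S, cf_q_S, !plus_INR, !mult_INR.
  pose proof (Qm_ge0 n). pose proof (Q_ge1 n).
  field. split; [lra | nra].
Qed.

Lemma x_conv_map n : x = conv_map x n (u n).
Proof.
  induction n as [|n IH].
  - unfold conv_map. simpl. field.
  - pose proof (gauss_iter_bounds n) as [[H0 _] _].
    destruct (cf_digit_spec n) as [_ E].
    rewrite E, conv_map_S; replace (INR (a n) + (/ u n - INR (a n))) with (/ u n) by ring.
    + rewrite Rinv_inv. exact IH.
    + apply Rinv_0_lt_compat. exact H0.
Qed.

Section Weighted.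

Variables (lam : R) (g : R -> R).
Hypothesis Hlam : 0 < lam < 1.
Hypothesis Hgw : golden_weight lam.
Hypothesis Hg0 : g 0 = 0.
Hypothesis Hg1 : g 1 = 1.
Hypothesis Hrec : mediant_rec lam g.
Hypothesis Hcont : continuous_01 g.

Local Notation p n := (cf_p x n).
Local Notation pm n := (cf_p_prev x n).
Local Notation q n := (cf_q x n).
Local Notation qm n := (cf_q_prev x n).
Local Notation w n := (cyl_weight lam n).
Local Notation sigma n := (cyl_incr g x n).
Local Notation M n := (cyl_mass g x n).
Local Notation T t := (quot_target g x t).

Lemma conv_map_0 n : h n 0 = ratio (p n) (q n).
Proof. unfold conv_map, ratio. pose proof (Q_ge1 n). field. lra. Qed.

Lemma conv_map_inv_nat n k : (1 <= k)%nat ->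
  h n (/ INR k) = ratio (k * p n + pm n) (k * q n + qm n).
Proof.
  intros Hk. assert (1 <= INR k) by (apply (le_INR 1); lia).
  pose proof (Q_ge1 n). pose proof (Qm_ge0 n).
  unfold conv_map, ratio. rewrite !plus_INR, !mult_INR. field. split; nra.
Qed.

Lemma conv_map_1 n : h n 1 = ratio (p n + pm n) (q n + qm n).
Proof.
  replace 1 with (/ INR 1) by (simpl; field). rewrite conv_map_inv_nat by lia.
  f_equal; lia.
Qed.

Lemma cyl_weight_det n :
  ((pm n * q n = p n * qm n + 1)%nat /\ w n = lam) \/
  ((p n * qm n = pm n * q n + 1)%nat /\ w n = 1 - lam).
Proof.
  unfold cyl_weight. destruct (cf_det_cases x n) as [[E D] | [E D]]; rewrite E; auto.
Qed.

Lemma cyl_incr_chain n k : (1 <= k)%nat ->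
  g (h n (/ INR k)) - g (h n 0) = sigma n * w n ^ (k - 1).
Proof.
  intros Hk. destruct (cf_continuant_bounds n) as (Q1 & Q2 & Q3 & Q4 & _).
  unfold cyl_incr. rewrite conv_map_inv_nat, conv_map_1, conv_map_0 by auto.
  pose proof (g_mediant_chain lam g Hrec (p n) (q n) (p n + pm n) (q n + qm n) (w n)
    Q3 ltac:(lia) ltac:(lia) ltac:(lia)) as C.
  replace (k * p n + pm n)%nat with ((k - 1) * p n + (p n + pm n))%nat by nia.
  replace (k * q n + qm n)%nat with ((k - 1) * q n + (q n + qm n))%nat by nia.
  apply C.
  destruct (cyl_weight_det n) as [[D ->] | [D ->]]; [left | right]; (split; [nia | reflexivity]).
Qed.

Lemma cyl_incr_S n : sigma (S n) = - sigma n * w n ^ (a n - 1) * (1 - w n).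
Proof.
  pose proof (cf_digit_bounds n) as [Ha _].
  assert (1 <= INR (a n)) by (apply (le_INR 1); lia).
  assert (E : sigma (S n) =
    (g (h n (/ INR (a n + 1))) - g (h n 0)) - (g (h n (/ INR (a n))) - g (h n 0))).
  { unfold cyl_incr. rewrite !conv_map_S by lra.
    rewrite plus_INR, Rplus_0_r. simpl (INR 1). ring. }
  rewrite E, !cyl_incr_chain by lia.
  replace (a n + 1 - 1)%nat with (S (a n - 1)) by lia. rewrite <- tech_pow_Rmult. ring.
Qed.

Lemma cyl_mass_S n : cyl_mass g x (S n) = cyl_mass g x n * w n ^ (a n - 1) * (1 - w n).
Proof.
  unfold cyl_mass. rewrite cyl_incr_S.
  pose proof (cyl_weight_bounds lam n Hlam).
  rewrite !Rabs_mult, Rabs_Ropp, (Rabs_pos_eq (w n ^ _)) by (apply pow_le; lra).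
  rewrite (Rabs_pos_eq (1 - w n)) by lra. reflexivity.
Qed.

Lemma g_oriented_mono e a b : (e = 1 \/ e = -1) -> 0 <= a <= 1 -> 0 <= b <= 1 ->
  0 <= e * (b - a) -> 0 <= e * (g b - g a).
Proof.
  intros [-> | ->] Ha Hb H.
  - assert (g a <= g b) by (apply (g_mono lam g Hlam Hg0 Hg1 Hrec Hcont); lra). lra.
  - assert (g b <= g a) by (apply (g_mono lam g Hlam Hg0 Hg1 Hrec Hcont); lra). lra.
Qed.

Lemma conv_map_oriented_le n w1 w2 :
  0 < Q n + Qm n * w1 -> 0 < Q n + Qm n * w2 -> w1 <= w2 ->
  0 <= alt_sign n * (h n w2 - h n w1).
Proof.
  intros H1 H2 H. rewrite conv_map_sub by lra. apply Rmult_le_pos; [lra|].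
  left. apply Rinv_0_lt_compat. nra.
Qed.

Lemma conv_map_oriented_lt n w1 w2 :
  0 < Q n + Qm n * w1 -> 0 < Q n + Qm n * w2 -> w1 < w2 ->
  0 < alt_sign n * (h n w2 - h n w1).
Proof.
  intros H1 H2 H. rewrite conv_map_sub by lra. apply Rmult_lt_0_compat; [lra|].
  apply Rinv_0_lt_compat. nra.
Qed.

Lemma conv_map_in01 n v : 0 <= v <= 1 -> 0 <= h n v <= 1.
Proof.
  intros Hv. destruct (cf_continuant_bounds n) as (_ & _ & Q3 & Q4 & _).
  apply le_INR in Q3. apply le_INR in Q4. rewrite plus_INR, plus_INR in Q4.
  pose proof (conv_map_den_pos n v ltac:(lra)).
  pose proof (pos_INR (cf_p x n)). pose proof (pos_INR (cf_p_prev x n)).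
  unfold conv_map. split.
  - apply Rmult_le_pos; [nra | apply Rlt_le, Rinv_0_lt_compat; lra].
  - apply (Rmult_le_reg_r (Q n + Qm n * v)); [lra|].
    unfold Rdiv. rewrite Rmult_assoc, Rinv_l by lra. nra.
Qed.

Lemma cyl_incr_oriented n : alt_sign n * cyl_incr g x n = M n.
Proof.
  unfold cyl_mass.
  assert (H : 0 <= alt_sign n * cyl_incr g x n).
  { apply g_oriented_mono; [apply alt_sign_cases | apply conv_map_in01; lra ..|].
    apply conv_map_oriented_le; try apply conv_map_den_pos; lra. }
  destruct (alt_sign_cases n) as [E | E]; rewrite E in *.
  - rewrite Rabs_pos_eq; lra.
  - rewrite Rabs_left1; lra.
Qed.

Lemma cyl_chain_mass n k : (1 <= k)%nat ->
  alt_sign n * (g (h n (/ INR k)) - g (h n 0)) = M n * w n ^ (k - 1).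
Proof.
  intros Hk. rewrite cyl_incr_chain by auto.
  rewrite <- cyl_incr_oriented. ring.
Qed.

Lemma sub_cyl_mass n k : (1 <= k)%nat ->
  alt_sign n * (g (h n (/ INR k)) - g (h n (/ INR (S k)))) = M n * w n ^ (k - 1) * (1 - w n).
Proof.
  intros Hk.
  replace (alt_sign n * (g (h n (/ INR k)) - g (h n (/ INR (S k)))))
    with (alt_sign n * (g (h n (/ INR k)) - g (h n 0)) -
          alt_sign n * (g (h n (/ INR (S k))) - g (h n 0))) by ring.
  rewrite !cyl_chain_mass by lia.
  replace (S k - 1)%nat with (S (k - 1)) by lia. simpl. ring.
Qed.

Lemma conv_map_dist0 n k : (1 <= k)%nat ->
  alt_sign n * (h n (/ INR k) - h n 0) = / (Q n * (Q n * INR k + Qm n)).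
Proof.
  intros Hk. assert (1 <= INR k) by (apply (le_INR 1); lia).
  assert (0 < / INR k) by (apply Rinv_0_lt_compat; lra).
  pose proof (Q_ge1 n). pose proof (Qm_ge0 n).
  rewrite conv_map_sub by nra. field. split; nra.
Qed.

Lemma cyl_gap n k w1 w2 u v : (1 <= k)%nat ->
  0 <= u -> u <= w1 -> w1 <= w2 -> w2 <= v -> v <= / INR k -> u < v ->
  0 <= alt_sign n * (g (h n w2) - g (h n w1)) <= alt_sign n * (g (h n v) - g (h n u)) /\
  0 < alt_sign n * (h n v - h n u) <= / (Q n * (Q n * INR k + Qm n)).
Proof.
  intros Hk Hu Hu1 H12 H2v Hvk Huv.
  assert (Hk1 : / INR k <= 1).
  { rewrite <- Rinv_1. apply Rinv_le_contravar; [lra | apply (le_INR 1); lia]. }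
  pose proof (alt_sign_cases n) as He.
  pose proof (conv_map_den_pos n) as D.
  assert (Hin : forall t, 0 <= t <= / INR k -> 0 <= h n t <= 1)
    by (intros; apply conv_map_in01; lra).
  assert (Hmono : forall s t, 0 <= s -> s <= t -> t <= / INR k ->
    0 <= alt_sign n * (g (h n t) - g (h n s))).
  { intros s t Hs Hst Ht. apply g_oriented_mono; try apply Hin; try lra.
    apply conv_map_oriented_le; try apply D; lra. }
  pose proof (Hmono u w1 Hu Hu1 ltac:(lra)). pose proof (Hmono w1 w2 ltac:(lra) H12 ltac:(lra)).
  pose proof (Hmono w2 v ltac:(lra) H2v Hvk).
  pose proof (conv_map_oriented_le n 0 u ltac:(apply D; lra) ltac:(apply D; lra) Hu).
  pose proof (conv_map_oriented_le n v (/ INR k) ltac:(apply D; lra) ltac:(apply D; lra) Hvk).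
  pose proof (conv_map_oriented_lt n u v ltac:(apply D; lra) ltac:(apply D; lra) Huv).
  rewrite <- conv_map_dist0 by auto. nra.
Qed.

(** * Lower bounds for the difference quotient *)

Lemma cyl_weight_golden n : golden_weight (w n).
Proof. unfold cyl_weight. destruct (Nat.even n); [|apply golden_weight_compl]; exact Hgw. Qed.

Lemma gauss_iter_window n : / (INR (a n) + 1) < u n < / INR (a n).
Proof.
  destruct (cf_digit_bounds n) as [Ha [H1 H2]].
  pose proof (proj1 (proj1 (gauss_iter_bounds n))).
  assert (1 <= INR (a n)) by (apply (le_INR 1); lia).
  split; [rewrite <- (Rinv_inv (u n)) | rewrite <- (Rinv_inv (u n))];
    apply Rinv_lt_contravar; try apply Rmult_lt_0_compat; try apply Rinv_0_lt_compat; lra.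
Qed.

Lemma quot_target_S n :
  T (S n) = M n * w n ^ (a n - 1) * (1 - w n) * (INR (a n) * Q n + Qm n) * Q n / phi ^ 6.
Proof.
  unfold quot_target. rewrite cyl_mass_S, cf_q_S, cf_q_prev_S.
  rewrite plus_INR, mult_INR. reflexivity.
Qed.

(** [y] lies in the cylinder of rank [n], on the far side of a whole sub-cylinder of rank
    [n + 1] from [x]. *)
Lemma quot_case_far n k v : (1 <= k)%nat -> (k + 2 <= a n)%nat ->
  / INR (S k) < v -> v <= / INR k ->
  T (S n) <= (g (h n v) - g x) / (h n v - x).
Proof.
  intros Hk HkN Hv1 Hv2.
  destruct (gauss_iter_window n) as [_ Hu].
  pose proof (proj1 (proj1 (gauss_iter_bounds n))).
  assert (Hw1 : u n < / INR (S (S k)))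
    by (eapply Rlt_le_trans; [exact Hu | apply Rinv_INR_le; lia]).
  assert (Hw12 : / INR (S (S k)) <= / INR (S k)) by (apply Rinv_INR_le; lia).
  destruct (cyl_gap n k (/ INR (S (S k))) (/ INR (S k)) (u n) v Hk ltac:(lra) ltac:(lra) Hw12
    ltac:(lra) Hv2 ltac:(lra))
    as [[Hm0 Hm] [Hl0 Hl]].
  rewrite <- x_conv_map in Hm, Hl0, Hl.
  rewrite sub_cyl_mass in Hm0, Hm by lia. replace (S k - 1)%nat with k in Hm0, Hm by lia.
  eapply Rle_trans; [|exact (diff_quot_ge _ _ _ _ _ _ _ (alt_sign_cases n) Hm0 Hm Hl0 Hl)].
  rewrite quot_target_S.
  apply far_bound; auto using cyl_weight_golden, cyl_mass_nonneg, Q_ge1, Qm_ge0.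
Qed.

(** [y] lies beyond the outer end of [x]'s sub-cylinder of rank [n + 1], which contains a
    whole sub-cylinder of rank [n + 2] lying between them. *)
Lemma quot_case_near n v : 0 <= v -> v < / (INR (a n) + 1) -> (2 <= a (S n))%nat ->
  T (S n) <= (g (h n v) - g x) / (h n v - x).
Proof.
  intros Hv0 Hv1 Ha2.
  destruct (cf_digit_bounds n) as [HN _].
  assert (HN1 : 1 <= INR (a n)) by (apply (le_INR 1); lia).
  pose proof (proj1 (proj1 (gauss_iter_bounds (S n)))).
  assert (Hu' : u (S n) < / 2).
  { destruct (gauss_iter_window (S n)) as [_ H']. eapply Rlt_le_trans; [exact H'|].
    apply Rinv_le_contravar; [lra | apply (le_INR 2); lia]. }
  assert (Eu : u n = / (INR (a n) + u (S n))).
  { destruct (cf_digit_spec n) as [_ ->]. rewrite Rplus_minus, Rinv_inv. reflexivity. }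
  destruct (gauss_iter_window n) as [_ HuN].
  assert (Ea : h n (/ (INR (a n) + 1)) = h (S n) (/ INR 1)).
  { rewrite conv_map_S; simpl; rewrite ?Rinv_1; [reflexivity | lra]. }
  assert (Eb : h n (/ (INR (a n) + / 2)) = h (S n) (/ INR 2)).
  { rewrite conv_map_S; [reflexivity |]. simpl. lra. }
  assert (Hab : / (INR (a n) + 1) <= / (INR (a n) + / 2)) by (apply Rinv_le_contravar; lra).
  assert (Hbu : / (INR (a n) + / 2) <= u n) by (rewrite Eu; apply Rinv_le_contravar; lra).
  destruct (cyl_gap n (a n) _ _ v (u n) HN Hv0 (Rlt_le _ _ Hv1) Hab Hbu ltac:(lra) ltac:(lra))
    as [[Hm0 Hm] [Hl0 Hl]].
  rewrite <- x_conv_map in Hm, Hl0, Hl. rewrite Ea, Eb in Hm0, Hm.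
  pose proof (sub_cyl_mass (S n) 1 ltac:(lia)) as Mass.
  rewrite alt_sign_S, pow_O, Rmult_1_r in Mass.
  replace (alt_sign n * (g (h (S n) (/ INR 2)) - g (h (S n) (/ INR 1))))
    with (M (S n) * (1 - w (S n))) in Hm0, Hm by lra.
  rewrite diff_quot_sym.
  eapply Rle_trans; [|exact (diff_quot_ge _ _ _ _ _ _ _ (alt_sign_cases n) Hm0 Hm Hl0 Hl)].
  unfold quot_target. rewrite cf_q_S, cf_q_prev_S, plus_INR, mult_INR.
  apply near_bound; auto using cyl_weight_golden, cyl_mass_nonneg, Q_ge1, Qm_ge0.
Qed.

Section TwoSided.

(** [pv/qv = (p_m - p_{m-1}) / (q_m - q_{m-1}) = h m (-1)] is the Farey neighbour of [p_m/q_m]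
    on the side away from [p_{m-1}/q_{m-1}]. *)
Variables (m pv qv : nat).
Hypothesis Hm : (1 <= m)%nat.
Hypothesis Hpv : (pv + cf_p_prev x m = cf_p x m)%nat.
Hypothesis Hqv : (qv + cf_q_prev x m = cf_q x m)%nat.
Hypothesis Hpq : (pv <= qv)%nat.
Hypothesis Hqv1 : (1 <= qv)%nat.

Lemma Q_sub_Qm : INR qv = Q m - Qm m.
Proof. rewrite <- Hqv, plus_INR. ring. Qed.

Lemma conv_map_den_pos_neg z : -1 <= z -> 0 < Q m + Qm m * z.
Proof.
  intros Hz. pose proof Q_sub_Qm. assert (1 <= INR qv) by (apply (le_INR 1); lia).
  pose proof (Qm_ge0 m). nra.
Qed.

Lemma conv_map_neg_inv_nat J : h m (- / INR (S J)) = ratio (J * p m + pv) (J * q m + qv).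
Proof.
  assert (Hpv' : INR pv = INR (p m) - INR (pm m)) by (rewrite <- Hpv, plus_INR; ring).
  pose proof Q_sub_Qm. assert (1 <= INR qv) by (apply (le_INR 1); lia).
  pose proof (Qm_ge0 m). pose proof (pos_INR J).
  unfold ratio, conv_map. rewrite !plus_INR, !mult_INR, Hpv', H, S_INR.
  field. split; [nra | lra].
Qed.

Lemma cyl_incr_chain_neg J : (1 <= J)%nat ->
  g (h m (- / INR (S J))) - g (h m 0) = - sigma m * (1 - w m) ^ (J - 1).
Proof.
  intros HJ.
  destruct (cf_continuant_bounds m) as (_ & _ & Hp & _ & _ & Hpm).
  specialize (Hpm ltac:(lia)) as (Hqm & Hpm).
  assert (Hsides : forall pu qu, pu = p m /\ qu = q m \/ pu = pm m /\ qu = qm m ->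
    ((pv * qu = pu * qv + 1)%nat /\ 1 - w m = lam) \/
    ((pu * qv = pv * qu + 1)%nat /\ 1 - w m = 1 - lam)).
  { intros pu qu Hu. destruct (cyl_weight_det m) as [[D ->] | [D ->]]; [right | left];
      (split; [destruct Hu as [[-> ->] | [-> ->]]; nia | ring]). }
  pose proof (g_mediant_chain lam g Hrec _ _ _ _ _ Hp Hpq ltac:(lia) ltac:(lia)
    (Hsides _ _ (or_introl (conj eq_refl eq_refl))) J) as C0.
  pose proof (g_mediant_chain lam g Hrec _ _ _ _ _ Hpm Hpq ltac:(lia) ltac:(lia)
    (Hsides _ _ (or_intror (conj eq_refl eq_refl))) 1) as C1.
  pose proof (g_mediant_chain lam g Hrec _ _ _ _ (1 - w m) Hpm Hp ltac:(lia) ltac:(lia)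
    ltac:(destruct (cyl_weight_det m) as [[D ->] | [D ->]]; [right | left];
          (split; [nia | ring])) 1) as C2.
  replace (1 * pm m + pv)%nat with (p m) in C1 by lia.
  replace (1 * qm m + qv)%nat with (q m) in C1 by lia.
  replace (1 * pm m + p m)%nat with (p m + pm m)%nat in C2 by lia.
  replace (1 * qm m + q m)%nat with (q m + qm m)%nat in C2 by lia.
  rewrite pow_1 in C1, C2.
  unfold cyl_incr. rewrite conv_map_neg_inv_nat, conv_map_1, conv_map_0, C0.
  replace J with (S (J - 1)) at 1 by lia. rewrite <- tech_pow_Rmult.
  set (A := g (ratio (pm m) (qm m))) in *. set (B := g (ratio pv qv)) in *.
  set (E := g (ratio (p m) (q m))) in *. set (W := 1 - w m) in *.
  assert (HE : E - A = (B - A) * W) by lra.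
  assert (g (ratio (p m + pm m) (q m + qm m)) - A = (E - A) * W) by lra.
  nra.
Qed.

Lemma two_sided_x_side :
  0 <= M m * w m ^ a m <= alt_sign m * (g x - g (h m 0)) /\
  0 < alt_sign m * (x - h m 0) <= / (Q m * (Q m * INR (a m) + Qm m)).
Proof.
  destruct (cf_digit_bounds m) as [HN _].
  destruct (gauss_iter_window m) as [Hu1 Hu2].
  assert (E : / INR (a m + 1) = / (INR (a m) + 1)) by (rewrite plus_INR; reflexivity).
  assert (0 < / INR (a m + 1)) by (apply Rinv_0_lt_compat, (lt_INR 0); lia).
  destruct (cyl_gap m (a m) 0 (/ INR (a m + 1)) 0 (u m) HN ltac:(lra) ltac:(lra) ltac:(lra)
    ltac:(lra) ltac:(lra) ltac:(lra)) as [[Hm0 Hm1] Hl].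
  rewrite <- x_conv_map in Hm1, Hl by auto.
  rewrite cyl_chain_mass, Nat.add_sub in Hm0, Hm1 by lia.
  split; [lra | exact Hl].
Qed.

Lemma conv_map_dist_neg J : (1 <= J)%nat ->
  alt_sign m * (h m 0 - h m (- / INR J)) = / (Q m * (Q m * INR J - Qm m)).
Proof.
  intros HJ. assert (HJ1 : 1 <= INR J) by (apply (le_INR 1); lia).
  assert (HJinv : 0 < / INR J <= 1)
    by (split; [apply Rinv_0_lt_compat | rewrite <- Rinv_1; apply Rinv_le_contravar]; lra).
  assert (0 < Q m + Qm m * - / INR J) by (apply conv_map_den_pos_neg; lra).
  assert (0 < Q m + Qm m * 0) by (apply conv_map_den_pos_neg; lra).
  rewrite conv_map_sub by lra.
  replace (Q m * INR J - Qm m) with (INR J * (Q m + Qm m * - / INR J)) by (field; lra).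
  pose proof Q_sub_Qm. assert (1 <= INR qv) by (apply (le_INR 1); lia).
  field. repeat split; apply Rgt_not_eq; nra.
Qed.

Lemma cyl_chain_mass_neg J : (1 <= J)%nat ->
  alt_sign m * (g (h m 0) - g (h m (- / INR (S J)))) = M m * (1 - w m) ^ (J - 1).
Proof.
  intros HJ. rewrite <- (cyl_incr_oriented m).
  replace (g (h m 0) - g (h m (- / INR (S J)))) with
    (- (g (h m (- / INR (S J))) - g (h m 0))) by ring.
  rewrite cyl_incr_chain_neg by auto. ring.
Qed.

Lemma two_sided_y_side J z : (1 <= J)%nat -> - / INR J <= z -> z <= - / INR (S J) ->
  0 <= h m z <= 1 ->
  0 <= M m * (1 - w m) ^ (J - 1) <= alt_sign m * (g (h m 0) - g (h m z)) /\
  0 < alt_sign m * (h m 0 - h m z) <= / (Q m * (Q m * INR J - Qm m)).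
Proof.
  intros HJ Hz1 Hz2 Hy.
  assert (HJinv : / INR J <= 1)
    by (rewrite <- Rinv_1; apply Rinv_le_contravar; [lra | apply (le_INR 1); lia]).
  assert (HSJ : 0 < / INR (S J)) by (apply Rinv_0_lt_compat, (lt_INR 0); lia).
  assert (HSJ' : / INR (S J) <= / INR J) by (apply Rinv_INR_le; lia).
  pose proof conv_map_den_pos_neg as D.
  pose proof (conv_map_dist_neg J HJ). pose proof (cyl_chain_mass_neg J HJ).
  set (wr := - / INR (S J)) in *.
  assert (E1 : 0 <= alt_sign m * (h m 0 - h m wr))
    by (apply conv_map_oriented_le; try apply D; unfold wr; lra).
  assert (E2 : 0 <= alt_sign m * (h m wr - h m z))
    by (apply conv_map_oriented_le; try apply D; lra).
  assert (Hwin : 0 <= h m wr <= 1).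
  { apply (between_01 (alt_sign m) (h m z) _ (h m 0)); auto using alt_sign_cases.
    apply conv_map_in01; lra. }
  assert (G : 0 <= alt_sign m * (g (h m wr) - g (h m z)))
    by (apply g_oriented_mono; auto using alt_sign_cases).
  assert (E3 : 0 <= alt_sign m * (h m z - h m (- / INR J)))
    by (apply conv_map_oriented_le; try apply D; lra).
  assert (E4 : 0 < alt_sign m * (h m 0 - h m z))
    by (apply conv_map_oriented_lt; try apply D; unfold wr in *; lra).
  pose proof (cyl_mass_nonneg g x m). pose proof (cyl_weight_bounds lam m Hlam).
  assert (0 <= (1 - w m) ^ (J - 1)) by (apply pow_le; lra).
  split; [split; [apply Rmult_le_pos |] | split]; lra.
Qed.

Lemma two_sided_quot J z : (1 <= J)%nat -> - / INR J <= z -> z <= - / INR (S J) ->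
  0 <= h m z <= 1 ->
  (M m * w m ^ a m + M m * (1 - w m) ^ (J - 1)) /
    (/ (Q m * (Q m * INR (a m) + Qm m)) + / (Q m * (Q m * INR J - Qm m))) <=
  (g (h m z) - g x) / (h m z - x).
Proof.
  intros HJ Hz1 Hz2 Hy.
  destruct two_sided_x_side as [[HA0 HA] [Ha0 Ha]].
  destruct (two_sided_y_side J z HJ Hz1 Hz2 Hy) as [[HB0 HB] [Hb0 Hb]].
  exact (diff_quot_ge_split _ _ _ _ _ _ _ _ _ _ _ (alt_sign_cases m)
    HA0 HA HB0 HB Ha0 Ha Hb0 Hb).
Qed.

Lemma two_sided_close z : -1 <= z < - / 2 -> 0 <= h m z <= 1 ->
  M m * Q m * INR qv / 2 <= (g (h m z) - g x) / (h m z - x).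
Proof.
  intros Hz Hy.
  pose proof (two_sided_quot 1 z (le_n 1) ltac:(simpl; lra) ltac:(simpl; lra) Hy) as H.
  simpl in H. rewrite !Rmult_1_r in H.
  pose proof (Q_ge1 m). pose proof (Qm_ge0 m). pose proof Q_sub_Qm.
  assert (1 <= INR qv) by (apply (le_INR 1); lia).
  destruct (cf_digit_bounds m) as [HN _].
  assert (1 <= INR (a m)) by (apply (le_INR 1); lia).
  pose proof (cyl_mass_nonneg g x m). pose proof (cyl_weight_bounds lam m Hlam).
  assert (0 <= w m ^ a m) by (apply pow_le; lra).
  assert (Hla : 0 < / (Q m * (Q m * INR (a m) + Qm m))) by (apply Rinv_0_lt_compat; nra).
  assert (Hab : / (Q m * (Q m * INR (a m) + Qm m)) <= / (Q m * (Q m - Qm m)))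
    by (apply Rinv_le_contravar; nra).
  eapply Rle_trans; [|eapply Rle_trans; [apply sum_ratio_ge | exact H]]; try nra.
  replace (M m * Q m * INR qv / 2) with (M m / (2 * / (Q m * (Q m - Qm m))))
    by (rewrite Q_sub_Qm; field; split; apply Rgt_not_eq; nra).
  unfold Rdiv. apply Rmult_le_compat_r; [apply Rlt_le, Rinv_0_lt_compat, Rmult_lt_0_compat|]; nra.
Qed.

Lemma two_sided_far z : - / 2 <= z < 0 -> 0 <= h m z <= 1 ->
  T (S m) <= (g (h m z) - g x) / (h m z - x).
Proof.
  intros Hz Hy.
  destruct (exists_inv_nat_bracket (- z) ltac:(lra)) as (J & HJ & HJ1 & HJ2).
  assert (HJ2' : (2 <= J)%nat).
  { destruct (le_lt_dec 2 J) as [C | C]; auto. replace J with 1%nat in HJ1 by lia.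
    simpl in HJ1. lra. }
  eapply Rle_trans; [|exact (two_sided_quot J z ltac:(lia) ltac:(lra) ltac:(lra) Hy)].
  rewrite quot_target_S.
  destruct (cf_digit_bounds m) as [HN _].
  apply two_sided_bound; auto using cyl_weight_golden, cyl_mass_nonneg, Q_ge1.
  split; [apply Qm_ge0 | apply Qm_le_Q; auto].
Qed.

End TwoSided.

Lemma conv_map_shift_prev n v : 0 < v ->
  h n v = h (S n) (/ v - INR (a n)).
Proof.
  intros Hv. rewrite conv_map_S by (auto; rewrite Rplus_minus; apply Rinv_0_lt_compat; lra).
  rewrite Rplus_minus, Rinv_inv. reflexivity.
Qed.

Lemma conv_map_shift_one n v : a (S n) = 1%nat -> 0 <= v < / (INR (a n) + 1) ->
  h n v = h (S (S n)) (v / (1 - INR (a n) * v) - 1).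
Proof.
  intros H1 Hv.
  assert (HN1 : 1 <= INR (a n)) by (apply (le_INR 1), cf_digit_bounds).
  destruct (shift_one_window _ _ HN1 Hv) as [Hd _].
  pose proof (Q_ge1 n). pose proof (Qm_ge0 n).
  unfold conv_map. repeat rewrite ?cf_p_S, ?cf_q_S, ?cf_p_prev_S, ?cf_q_prev_S.
  rewrite H1. repeat rewrite ?plus_INR, ?mult_INR.
  simpl (INR 1). field. repeat split; try lra.
  intro Hc. assert (0 < Q n + Qm n * v) by nra.
  assert ((INR (a n) * Q n + Qm n + Q n) * (1 - INR (a n) * v) +
    (INR (a n) * Q n + Qm n) * (v - (1 - INR (a n) * v)) = Q n + Qm n * v) by ring.
  lra.
Qed.

(** [y] lies in the neighbouring sub-cylinder of rank [n + 1], with digit [a n - 1]. *)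
Lemma quot_case_prev n v : (2 <= a n)%nat -> / INR (a n) < v <= / (INR (a n) - 1) ->
  (/ v - INR (a n) < - / 2 -> T (S n) <= (g (h n v) - g x) / (h n v - x)) /\
  (- / 2 <= / v - INR (a n) -> T (S (S n)) <= (g (h n v) - g x) / (h n v - x)).
Proof.
  intros HN Hv.
  destruct (inv_sub_window (INR (a n)) v ltac:(apply (le_INR 2); lia) Hv) as [Hv01 Hz].
  assert (Hy : 0 <= h (S n) (/ v - INR (a n)) <= 1)
    by (rewrite <- conv_map_shift_prev by lra; apply conv_map_in01; lra).
  rewrite conv_map_shift_prev by lra.
  destruct (cf_continuant_bounds n) as (Q1 & _ & Q3 & Q4 & _).
  set (pv := ((a n - 1) * cf_p x n + cf_p_prev x n)%nat).
  set (qv := ((a n - 1) * cf_q x n + cf_q_prev x n)%nat).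
  assert (R1 : (pv + cf_p_prev x (S n) = cf_p x (S n))%nat)
    by (unfold pv; rewrite cf_p_prev_S, cf_p_S; nia).
  assert (R2 : (qv + cf_q_prev x (S n) = cf_q x (S n))%nat)
    by (unfold qv; rewrite cf_q_prev_S, cf_q_S; nia).
  assert (R3 : (pv <= qv)%nat) by (unfold pv, qv; nia).
  assert (R4 : (1 <= qv)%nat) by (unfold qv; nia).
  split; intro C.
  - eapply Rle_trans;
      [|exact (two_sided_close (S n) pv qv ltac:(lia) R1 R2 R3 R4 (/ v - INR (a n))
                 ltac:(lra) Hy)].
    unfold quot_target. rewrite cf_q_prev_S.
    apply prev_close_bound; [apply cyl_mass_nonneg | apply pos_INR |].
    split; [apply pos_INR | apply le_INR; unfold qv; nia].
  - apply (two_sided_far (S n) pv qv ltac:(lia) R1 R2 R3 R4); [lra | exact Hy].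
Qed.

(** When [a (n + 2) = 1], a point beyond [x]'s sub-cylinder of rank [n + 1] is compared
    at rank [n + 2]. *)
Lemma quot_case_one n v : a (S n) = 1%nat -> 0 <= v < / (INR (a n) + 1) ->
  (v / (1 - INR (a n) * v) - 1 < - / 2 -> T (S n) <= (g (h n v) - g x) / (h n v - x)) /\
  (- / 2 <= v / (1 - INR (a n) * v) - 1 ->
     T (S (S (S n))) <= (g (h n v) - g x) / (h n v - x)).
Proof.
  intros H1 Hv.
  assert (HN1 : 1 <= INR (a n)) by (apply (le_INR 1), cf_digit_bounds).
  destruct (shift_one_window _ _ HN1 Hv) as (_ & Hv1 & Hz).
  assert (Hy : 0 <= h (S (S n)) (v / (1 - INR (a n) * v) - 1) <= 1)
    by (rewrite <- conv_map_shift_one by auto; apply conv_map_in01; lra).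
  rewrite (conv_map_shift_one n v H1 Hv).
  destruct (cf_continuant_bounds n) as (Q1 & _ & Q3 & _).
  assert (R1 : (cf_p x n + cf_p_prev x (S (S n)) = cf_p x (S (S n)))%nat)
    by (rewrite (cf_p_S x (S n)), H1, !cf_p_prev_S; lia).
  assert (R2 : (cf_q x n + cf_q_prev x (S (S n)) = cf_q x (S (S n)))%nat)
    by (rewrite (cf_q_S x (S n)), H1, !cf_q_prev_S; lia).
  split; intro C.
  - eapply Rle_trans;
      [|exact (two_sided_close (S (S n)) _ _ ltac:(lia) R1 R2 Q3 Q1
                 (v / (1 - INR (a n) * v) - 1) ltac:(lra) Hy)].
    unfold quot_target.
    rewrite (cyl_mass_S (S n)), H1, (cf_q_S x (S n)), H1, plus_INR, mult_INR,
      !cf_q_prev_S, pow_O, Rmult_1_r, Rmult_1_l.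
    apply one_close_bound; auto using cyl_weight_golden, cyl_mass_nonneg, pos_INR.
  - apply (two_sided_far (S (S n)) _ _ ltac:(lia) R1 R2 Q3 Q1); [lra | exact Hy].
Qed.

End Weighted.

Lemma in_cyl_0 y : 0 <= y <= 1 -> in_cyl x 0 y.
Proof. intros Hy. exists y. split; [exact Hy|]. unfold conv_map. simpl. field. Qed.

Lemma in_cyl_dist n y : in_cyl x n y -> Rabs (y - x) <= / Q n.
Proof.
  intros (v & Hv & ->).
  pose proof (proj1 (gauss_iter_bounds n)).
  rewrite (x_conv_map n) at 2.
  pose proof (Q_ge1 n). pose proof (Qm_ge0 n).
  set (u := gauss_iter n x) in *.
  assert (D1 : 0 < Q n + Qm n * u) by nra. assert (D2 : 0 < Q n + Qm n * v) by nra.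
  assert (E : Rabs (h n v - h n u) = Rabs (alt_sign n * (h n v - h n u))).
  { destruct (alt_sign_cases n) as [-> | ->].
    - rewrite Rmult_1_l. reflexivity.
    - rewrite Rabs_mult, (Rabs_left (-1)) by lra. ring. }
  rewrite E, conv_map_sub by lra.
  unfold Rdiv. rewrite Rabs_mult, Rabs_inv, (Rabs_pos_eq (_ * _)) by nra.
  assert (Hvu : Rabs (v - u) <= 1) by (apply Rabs_le; lra).
  apply Rle_trans with (1 * / ((Q n + Qm n * u) * (Q n + Qm n * v))).
  - apply Rmult_le_compat_r; [left; apply Rinv_0_lt_compat; nra | exact Hvu].
  - assert (0 <= Qm n * u) by nra. assert (0 <= Qm n * v) by nra.
    rewrite Rmult_1_l. apply Rinv_le_contravar; nra.
Qed.

Lemma not_in_cyl_far y : y <> x -> exists B, ~ in_cyl x B y.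
Proof.
  intros Hyx. assert (Had : 0 < Rabs (y - x)) by (apply Rabs_pos_lt; lra).
  destruct (archimed (/ Rabs (y - x))) as [Hup _].
  exists (S (Z.to_nat (up (/ Rabs (y - x))))). intro HI. apply in_cyl_dist in HI.
  set (B := S (Z.to_nat (up (/ Rabs (y - x))))) in *.
  assert (HB : / Rabs (y - x) < INR B).
  { unfold B. rewrite S_INR. destruct (Z_lt_le_dec (up (/ Rabs (y - x))) 0) as [C | C].
    - apply IZR_lt in C. pose proof (Rinv_0_lt_compat _ Had).
      pose proof (pos_INR (Z.to_nat (up (/ Rabs (y - x))))). lra.
    - rewrite INR_IZR_INZ, Z2Nat.id by auto. lra. }
  assert (HQ : INR B <= Q B) by (apply le_INR, cf_continuant_bounds; auto).
  assert (0 < / Rabs (y - x)) by (apply Rinv_0_lt_compat; lra).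
  assert (/ Q B < Rabs (y - x)).
  { rewrite <- (Rinv_inv (Rabs (y - x))). apply Rinv_lt_contravar; [nra | lra]. }
  lra.
Qed.

Lemma in_cyl_S n v : / (INR (a n) + 1) <= v <= / INR (a n) -> in_cyl x (S n) (h n v).
Proof.
  intros [H1 H2].
  destruct (cf_digit_bounds n) as [HN _].
  assert (HN1 : 1 <= INR (a n)) by (apply (le_INR 1); lia).
  assert (Hv0 : 0 < v) by (eapply Rlt_le_trans; [|exact H1]; apply Rinv_0_lt_compat; lra).
  assert (Hiv : INR (a n) <= / v <= INR (a n) + 1).
  { split; [rewrite <- (Rinv_inv (INR (a n))) | rewrite <- (Rinv_inv (INR (a n) + 1))];
      apply Rinv_le_contravar; try apply Rinv_0_lt_compat; lra. }
  exists (/ v - INR (a n)). split; [lra|].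
  rewrite conv_map_S by lra. rewrite Rplus_minus, Rinv_inv. reflexivity.
Qed.

Lemma quot_exit_below n v : 0 <= v < / (INR (a n) + 1) ->
  exists t, (1 <= t)%nat /\ forall lam g, golden_weight lam -> is_g lam g ->
    quot_target g x t <= (g (h n v) - g x) / (h n v - x).
Proof.
  intros Hv.
  destruct (le_lt_dec 2 (a (S n))) as [C | C].
  - exists (S n). split; [lia|]. intros lam g Hw (G0 & G1 & Grec & Gcont).
    apply (quot_case_near lam g (golden_weight_01 lam Hw) Hw G0 G1 Grec Gcont); auto; lra.
  - assert (H1 : a (S n) = 1%nat) by (pose proof (proj1 (cf_digit_bounds (S n))); lia).
    destruct (Rlt_le_dec (v / (1 - INR (a n) * v) - 1) (- / 2)) as [Cz | Cz];
      [exists (S n) | exists (S (S (S n)))]; (split; [lia|]);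
      intros lam g Hw (G0 & G1 & Grec & Gcont);
      destruct (quot_case_one lam g (golden_weight_01 lam Hw) Hw G0 G1 Grec Gcont n v H1 Hv)
        as [Q1 Q2]; auto.
Qed.

Lemma quot_exit_above n v : / INR (a n) < v <= 1 ->
  exists t, (1 <= t)%nat /\ forall lam g, golden_weight lam -> is_g lam g ->
    quot_target g x t <= (g (h n v) - g x) / (h n v - x).
Proof.
  intros Hv.
  destruct (cf_digit_bounds n) as [HN _].
  assert (Hv0 : 0 < v)
    by (eapply Rlt_trans; [|apply Hv]; apply Rinv_0_lt_compat, (lt_INR 0); lia).
  destruct (exists_inv_nat_bracket v ltac:(lra)) as (k & Hk & Hk1 & Hk2).
  assert (HkN : (k < a n)%nat).
  { destruct (le_lt_dec (a n) k) as [C | C]; [|exact C].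
    pose proof (Rinv_INR_le (a n) k ltac:(lia)). lra. }
  destruct (le_lt_dec (k + 2) (a n)) as [C | C].
  - exists (S n). split; [lia|]. intros lam g Hw (G0 & G1 & Grec & Gcont).
    apply (quot_case_far lam g (golden_weight_01 lam Hw) Hw G0 G1 Grec Gcont n k); auto.
  - assert (Hv2 : v <= / (INR (a n) - 1)).
    { replace (INR (a n) - 1) with (INR k) by (rewrite <- (Nat.sub_add 1 (a n)) at 1 by lia;
        rewrite plus_INR; simpl; replace (a n - 1)%nat with k by lia; ring).
      exact Hk2. }
    destruct (Rlt_le_dec (/ v - INR (a n)) (- / 2)) as [Cz | Cz];
      [exists (S n) | exists (S (S n))]; (split; [lia|]);
      intros lam g Hw (G0 & G1 & Grec & Gcont);
      destruct (quot_case_prev lam g (golden_weight_01 lam Hw) Hw G0 G1 Grec Gcont n v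
        ltac:(lia) (conj (proj1 Hv) Hv2)) as [Q1 Q2]; auto.
Qed.

Lemma quot_exit_cylinder n v : 0 <= v <= 1 -> ~ in_cyl x (S n) (h n v) ->
  exists t, (1 <= t)%nat /\ forall lam g, golden_weight lam -> is_g lam g ->
    quot_target g x t <= (g (h n v) - g x) / (h n v - x).
Proof.
  intros Hv Hout.
  destruct (Rlt_le_dec v (/ (INR (a n) + 1))) as [Hlow | Hlow];
    [apply quot_exit_below; lra|].
  destruct (Rle_lt_dec v (/ INR (a n))) as [Hmid | Hhigh];
    [exfalso; apply Hout, in_cyl_S; lra | apply quot_exit_above; lra].
Qed.

Theorem quot_lower_bound :
  exists eta, 0 < eta /\ forall delta, delta <> 0 -> Rabs delta < eta ->
    exists t, (1 <= t)%nat /\ forall lam g, golden_weight lam -> is_g lam g ->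
      quot_target g x t <= (g (x + delta) - g x) / delta.
Proof.
  exists (Rmin x (1 - x)). split; [apply Rmin_glb_lt; lra|].
  intros delta Hd0 Hd.
  assert (Hy : 0 <= x + delta <= 1).
  { pose proof (Rmin_l x (1 - x)). pose proof (Rmin_r x (1 - x)).
    apply Rabs_def2 in Hd. lra. }
  destruct (not_in_cyl_far (x + delta) ltac:(lra)) as [B HB].
  destruct (exists_last_true (fun n => in_cyl x n (x + delta)) B (in_cyl_0 _ Hy) HB)
    as (n & (v & Hv & Hyv) & Hn).
  rewrite Hyv in Hn.
  destruct (quot_exit_cylinder n v Hv Hn) as (t & Ht & Hq).
  exists t. split; [exact Ht|]. intros lam g Hw Hg.
  replace delta with (x + delta - x) at 2 by ring. rewrite Hyv. exact (Hq lam g Hw Hg).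
Qed.

(** * Cylinder masses for [1/phi] and [tau] *)

Lemma golden_weight_inv_phi : golden_weight (/ phi).
Proof. left. split; [reflexivity|]. pose proof inv_phi_add_tau. lra. Qed.

Lemma golden_weight_tau : golden_weight tau.
Proof. right. split; [reflexivity|]. pose proof inv_phi_add_tau. lra. Qed.

Lemma cyl_mass_phi g : is_g (/ phi) g ->
  forall n, cyl_mass g x n = (/ phi) ^ (S_phi x n + (if Nat.odd n then 1 else 0)).
Proof.
  intros (G0 & G1 & Grec & _).
  pose proof (golden_weight_bounds _ golden_weight_inv_phi). pose proof tau_bounds.
  pose proof inv_phi_add_tau.
  induction n as [|n IH].
  - unfold cyl_mass. rewrite cyl_incr_0 by auto. simpl. apply Rabs_R1.
  - rewrite (cyl_mass_S (/ phi) g ltac:(lra) Grec n), IH.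
    pose proof (proj1 (cf_digit_bounds n)).
    simpl S_phi. rewrite Nat.odd_succ. unfold cyl_weight. rewrite <- Nat.negb_odd.
    set (s := S_phi x n). set (k := cf_digit x (S n)) in *.
    replace (1 - / phi) with ((/ phi) ^ 2) by (rewrite <- tau_eq; lra).
    destruct (Nat.odd n); cbn -[pow].
    + replace (1 - (/ phi) ^ 2) with (/ phi) by (rewrite <- tau_eq; lra).
      rewrite <- pow_mult. replace (s + (k + (k + 0)) + 0)%nat with (s + 1 + 2 * (k - 1) + 1)%nat
        by lia.
      rewrite !pow_add. ring.
    + replace (1 - / phi) with ((/ phi) ^ 2) by (rewrite <- tau_eq; lra).
      replace (s + (k + 0) + 1)%nat with (s + 0 + (k - 1) + 2)%nat by lia.
      rewrite !pow_add. ring.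
Qed.

Lemma cyl_mass_tau g : is_g tau g ->
  forall n, cyl_mass g x n * (if Nat.odd n then / phi else 1) = (/ phi) ^ (S_tau x n).
Proof.
  intros (G0 & G1 & Grec & _).
  pose proof (golden_weight_bounds _ golden_weight_tau). pose proof tau_bounds.
  pose proof inv_phi_add_tau.
  induction n as [|n IH].
  - unfold cyl_mass. rewrite cyl_incr_0 by auto. simpl. rewrite Rabs_R1. ring.
  - rewrite (cyl_mass_S tau g ltac:(lra) Grec n).
    pose proof (proj1 (cf_digit_bounds n)).
    simpl S_tau. rewrite Nat.odd_succ. unfold cyl_weight. rewrite <- Nat.negb_odd in *.
    set (s := S_tau x n) in *. set (k := cf_digit x (S n)) in *.
    replace (1 - tau) with (/ phi) by lra.
    destruct (Nat.odd n); cbn -[pow] in *.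
    + replace (1 - / phi) with ((/ phi) ^ 2) by (rewrite <- tau_eq; lra).
      replace (s + (k + 0))%nat with (s + (k - 1) + 1)%nat by lia.
      rewrite !pow_add, <- IH. ring.
    + rewrite Rmult_1_r in IH. replace (1 - tau) with (/ phi) by lra.
      rewrite tau_eq, <- pow_mult, IH.
      replace (s + (k + (k + 0)))%nat with (s + 2 * (k - 1) + 1 + 1)%nat by lia.
      rewrite !pow_add. ring.
Qed.

Lemma quot_target_phi g t : is_g (/ phi) g -> (1 <= t)%nat ->
  INR (cf_q x t * cf_q x (t - 1)) / phi ^ (S_phi x t + 7) <= quot_target g x t.
Proof.
  intros Hg Ht. destruct t as [|t]; [lia|].
  replace (S t - 1)%nat with t by lia. rewrite <- (cf_q_prev_S x t), mult_INR.
  unfold quot_target. rewrite (cyl_mass_phi g Hg).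
  pose proof inv_phi_bounds.
  pose proof (Rmult_le_pos _ _ (pos_INR (cf_q x (S t))) (pos_INR (cf_q_prev x (S t)))).
  set (s := S_phi x (S t)).
  assert (Hp : (/ phi) ^ (s + 1) <= (/ phi) ^ (s + (if Nat.odd (S t) then 1 else 0))).
  { destruct (Nat.odd (S t)); [lra|].
    rewrite Nat.add_0_r, pow_add, pow_1. assert (0 <= (/ phi) ^ s) by (apply pow_le; lra). nra. }
  unfold Rdiv.
  replace (/ phi ^ (s + 7)) with ((/ phi) ^ (s + 1) * / phi ^ 6)
    by (rewrite pow_inv, <- Rinv_mult, <- pow_add; f_equal; f_equal; lia).
  pose proof (Rinv_0_lt_compat _ (phi_pow_pos 6)).
  assert (HK : 0 <= INR (cf_q x (S t)) * INR (cf_q_prev x (S t)) * / phi ^ 6) by nra.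
  pose proof (Rmult_le_compat_r _ _ _ HK Hp). lra.
Qed.

Lemma quot_target_tau g t : is_g tau g -> (1 <= t)%nat ->
  INR (cf_q x t * cf_q x (t - 1)) / phi ^ (S_tau x t + 9) <= quot_target g x t.
Proof.
  intros Hg Ht. destruct t as [|t]; [lia|].
  replace (S t - 1)%nat with t by lia. rewrite <- (cf_q_prev_S x t), mult_INR.
  unfold quot_target.
  pose proof inv_phi_bounds. pose proof phi_bounds.
  pose proof (Rmult_le_pos _ _ (pos_INR (cf_q x (S t))) (pos_INR (cf_q_prev x (S t)))).
  set (s := S_tau x (S t)).
  assert (HM : (/ phi) ^ s <= cyl_mass g x (S t)).
  { unfold s. rewrite <- (cyl_mass_tau g Hg (S t)). pose proof (cyl_mass_nonneg g x (S t)).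
    destruct (Nat.odd (S t)); nra. }
  assert (E : / phi ^ (s + 9) <= (/ phi) ^ s * / phi ^ 6).
  { rewrite pow_inv, <- Rinv_mult, <- pow_add. apply Rinv_le_contravar; [apply phi_pow_pos|].
    replace (s + 9)%nat with ((s + 6) + 3)%nat by lia. rewrite (pow_add _ (s + 6) 3).
    assert (1 <= phi ^ 3) by (apply pow_R1_Rle; lra). pose proof (phi_pow_pos (s + 6)). nra. }
  pose proof (Rinv_0_lt_compat _ (phi_pow_pos 6)).
  assert (HK : 0 <= INR (cf_q x (S t)) * INR (cf_q_prev x (S t)) * / phi ^ 6) by nra.
  pose proof (Rmult_le_compat_r _ _ _ HK HM).
  pose proof (Rmult_le_compat_l _ _ _ H1 E). unfold Rdiv. lra.
Qed.

End Expansion.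

Theorem lemma2 (g_phi g_tau : R -> R) :
  is_g (/ phi) g_phi -> is_g tau g_tau ->
  forall x : R, 0 < x < 1 -> irrational x ->
  exists eta : R, 0 < eta /\
    forall delta : R, delta <> 0 -> Rabs delta < eta ->
    exists t : nat, (1 <= t)%nat /\
      (g_phi (x + delta) - g_phi x) / delta >=
        INR (cf_q x t * cf_q x (t - 1)) / phi ^ (S_phi x t + 7) /\
      (g_tau (x + delta) - g_tau x) / delta >=
        INR (cf_q x t * cf_q x (t - 1)) / phi ^ (S_tau x t + 9).
Proof.
  intros Hgp Hgt x Hx Hirr.
  destruct (quot_lower_bound x Hx Hirr) as (eta & Heta & Hquot).
  exists eta. split; [exact Heta|]. intros delta Hd Hde.
  destruct (Hquot delta Hd Hde) as (t & Ht & Hall).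
  exists t. split; [exact Ht|]. split; apply Rle_ge.
  - eapply Rle_trans; [exact (quot_target_phi x Hx Hirr g_phi t Hgp Ht)|].
    exact (Hall _ _ golden_weight_inv_phi Hgp).
  - eapply Rle_trans; [exact (quot_target_tau x Hx Hirr g_tau t Hgt Ht)|].
    exact (Hall _ _ golden_weight_tau Hgt).
Qed.
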